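(* Let $v(0)\in\mathcal N^*$, $v(0)\neq0$, and let $v(t)$ be the unique solution of the critical equations with initial condition $v(0)$, with $\Phi(t)=m_0(0)-m_0(t)$. Then, with $t_{gel}=1/m_1(0)$, $$\Phi(T)=\begin{cases}0& T\le t_{gel}\\ F_0(T)& T\ge t_{gel}\end{cases}\qquad\text{and}\qquad \int_0^T\Phi(t)dt=\begin{cases}0& T\le t_{gel}\\ G_0(T)& T\ge t_{gel}.\end{cases}$$
   Context: $\mathcal N$: sequences $v=(v_k)_{k\ge1}$ of nonnegative reals with $\sum_kv_k<\infty$; $\mathcal N^*$: those with finitely many nonzero terms; $m_0=\sum_kv_k$, $m_1=\sum_kkv_k$. Critical equations: $v(t)\in\mathcal N$ with $v_k(t)=v_k(0)+\int_0^t\big(\tfrac k2\sum_{l=1}^{k-1}v_lv_{k-l}-kv_km_0(s)\big)ds$ for all $k$, $m_0(0)-m_0(t)$ nondecreasing in $[0,m_0(0))$. Functions $F_0,G_0$ on $(0,\infty)$: for $x\in\mathbb R$ put $w(x):=\big(\sum_kkv_k(0)e^{-kx}\big)^{-1}$, a strictly increasing bijection $\mathbb R\to(0,\infty)$, and define $F_0(w(x)):=\sum_kv_k(0)(1-e^{-kx})$ and $G_0(w(x)):=w(x)F_0(w(x))-x$. (Equivalently, with $U_0(x)=\sum_kv_k(0)(e^{-kx}-1)$ and $X_0$ its inverse function, $F_0(-X_0'(u))=-u$ and $G_0(w)=-\min_u\{wu+X_0(u)\}$ is the Legendre transform.) *)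

From Stdlib Require Import Reals Lra ClassicalEpsilon.
From Coquelicot Require Import Coquelicot.
Open Scope R_scope.

(* A sequence v = (v_k)_{k>=1} is modelled as v : nat -> R; the entry v 0 is ignored. *)

Definition m0 (v : nat -> R) : R := Series (fun n => v (S n)).
Definition m1 (v : nat -> R) : R := Series (fun n => INR (S n) * v (S n)).

Definition in_N (v : nat -> R) : Prop :=
  (forall k, (1 <= k)%nat -> 0 <= v k) /\ ex_series (fun n => v (S n)).

Definition in_Nstar (v : nat -> R) : Prop :=
  in_N v /\ exists K : nat, forall k, (K < k)%nat -> v k = 0.

Definition conv (v : nat -> R) (k : nat) : R :=
  sum_n_m (fun l => v l * v (k - l)%nat) 1 (k - 1).

Definition crit_rhs (v : nat -> R) (k : nat) : R :=
  INR k / 2 * conv v k - INR k * v k * m0 v.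

Definition critical_solution (v : R -> nat -> R) : Prop :=
  (forall t, 0 <= t -> in_N (v t)) /\
  (forall k t, (1 <= k)%nat -> 0 <= t ->
     is_RInt (fun s => crit_rhs (v s) k) 0 t (v t k - v 0 k)) /\
  (forall s t, 0 <= s -> s <= t -> m0 (v 0) - m0 (v s) <= m0 (v 0) - m0 (v t)) /\
  (forall t, 0 <= t -> 0 <= m0 (v 0) - m0 (v t) < m0 (v 0)).

Definition wfun (v : nat -> R) (x : R) : R :=
  / Series (fun n => INR (S n) * v (S n) * exp (- INR (S n) * x)).

(* the x with w(x) = T (w is a bijection R -> (0,oo)) *)
Definition winv (v : nat -> R) (T : R) : R :=
  epsilon (inhabits 0) (fun x => wfun v x = T).

(* F_0(w(x)) = sum_k v_k (1 - e^{-kx}) *)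
Definition F0 (v : nat -> R) (T : R) : R :=
  Series (fun n => v (S n) * (1 - exp (- INR (S n) * winv v T))).

(* G_0(w(x)) = w(x) F_0(w(x)) - x *)
Definition G0 (v : nat -> R) (T : R) : R := T * F0 v T - winv v T.

Definition Phi (v : R -> nat -> R) (t : R) : R := m0 (v 0) - m0 (v t).

From Stdlib Require Import Reals Lra Lia ClassicalEpsilon ZArith.
From Coquelicot Require Import Coquelicot.
Open Scope R_scope.

(* Write a_k = v_k(0), G(u) = sum_k a_k e^{ku}, phi = G', M(t) = m0(v(t)) and
   A(t) = int_0^t M.  The rescaled concentrations b_k = e^{k A} v_k satisfy
   b_k' = (k/2) sum_{l<k} b_l b_{k-l} >= 0, with no loss term.  Along the
   characteristics x = -w + s G(w) the truncated sums Y(s) = sum_{k<=N} b_k(s) e^{-k x(s)}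
   obey a differential inequality with Y(0) <= G(w) which forces Y <= G(w) for all s,
   and Y(s) -> G(w) as N -> oo as long as s phi(c) <= 1 for some c > w.  Evaluating at
   x = A(t) gives M(t) = G(u(t)) and t phi(u(t)) <= 1 for u(t) = t M(t) - A(t).
   These two relations, together with M nonincreasing and A' = M, pin down u:
   u(t) = 0 as long as t phi(0) <= 1, i.e. t <= 1/m1(0), and afterwards u(t) is the
   root c of t phi(c) = 1.  Then Phi(T) = G(0) - G(u(T)) and
   int_0^T Phi = T G(0) - A(T) = T (G(0) - G(u(T))) - u(T), which are F0(T) and
   G0(T) since w(-c) = 1/phi(c). *)

Fixpoint fsum (f : nat -> R) (N : nat) : R :=
  match N with O => 0 | S n => fsum f n + f (S n) end.

Lemma fsum_ext f g N : (forall k, (1 <= k <= N)%nat -> f k = g k) -> fsum f N = fsum g N.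
Proof.
  induction N; intros H; simpl; auto.
  rewrite IHN; [rewrite H; auto; lia|]. intros; apply H; lia.
Qed.

Lemma fsum_le f g N : (forall k, (1 <= k <= N)%nat -> f k <= g k) -> fsum f N <= fsum g N.
Proof.
  induction N; intros H; simpl; [lra|].
  assert (f (S N) <= g (S N)) by (apply H; lia).
  assert (fsum f N <= fsum g N) by (apply IHN; intros; apply H; lia). lra.
Qed.

Lemma fsum_lt f g N k0 : (1 <= k0 <= N)%nat -> (forall k, (1 <= k <= N)%nat -> f k <= g k) ->
  f k0 < g k0 -> fsum f N < fsum g N.
Proof.
  induction N; intros Hk Hle Hlt; [lia|]. simpl.
  destruct (Nat.eq_dec k0 (S N)) as [->|Hne].
  - assert (fsum f N <= fsum g N) by (apply fsum_le; intros; apply Hle; lia). lra.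
  - assert (fsum f N < fsum g N) by (apply IHN; auto; [lia|intros; apply Hle; lia]).
    assert (f (S N) <= g (S N)) by (apply Hle; lia). lra.
Qed.

Lemma fsum_plus f g N : fsum (fun k => f k + g k) N = fsum f N + fsum g N.
Proof. induction N; simpl; lra. Qed.

Lemma fsum_minus f g N : fsum (fun k => f k - g k) N = fsum f N - fsum g N.
Proof. induction N; simpl; lra. Qed.

Lemma fsum_scal c f N : fsum (fun k => c * f k) N = c * fsum f N.
Proof. induction N; simpl; [lra|]. rewrite IHN; lra. Qed.

Lemma fsum_scal_r c f N : fsum f N * c = fsum (fun k => f k * c) N.
Proof. rewrite Rmult_comm, <- fsum_scal. apply fsum_ext; intros; ring. Qed.

Lemma fsum_const c N : fsum (fun _ => c) N = INR N * c.
Proof. induction N; simpl fsum; [simpl; lra|]. rewrite IHN, S_INR. lra. Qed.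

Lemma fsum_nonneg f N : (forall k, (1 <= k <= N)%nat -> 0 <= f k) -> 0 <= fsum f N.
Proof. intros H. replace 0 with (fsum (fun _ => 0) N) by (rewrite fsum_const; ring). now apply fsum_le. Qed.

Lemma fsum_term_le f N k0 : (1 <= k0 <= N)%nat -> (forall k, (1 <= k <= N)%nat -> 0 <= f k) ->
  f k0 <= fsum f N.
Proof.
  induction N; intros Hk H; [lia|]. simpl.
  destruct (Nat.eq_dec k0 (S N)) as [->|Hne].
  - assert (0 <= fsum f N) by (apply fsum_nonneg; intros; apply H; lia). lra.
  - assert (f k0 <= fsum f N) by (apply IHN; [lia|intros; apply H; lia]).
    assert (0 <= f (S N)) by (apply H; lia). lra.
Qed.

Lemma fsum_le_const f N c : (forall k, (1 <= k <= N)%nat -> f k <= c) -> fsum f N <= INR N * c.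
Proof. intros H. rewrite <- fsum_const. now apply fsum_le. Qed.

Lemma fsum_le_fsum_longer f N M : (forall k, (1 <= k)%nat -> 0 <= f k) -> (N <= M)%nat ->
  fsum f N <= fsum f M.
Proof.
  intros H HNM. induction HNM; [lra|]. simpl.
  assert (0 <= f (S m)) by (apply H; lia). lra.
Qed.

Lemma fsum_stable f K N : (forall k, (K < k)%nat -> f k = 0) -> (K <= N)%nat -> fsum f N = fsum f K.
Proof. intros HK HN. induction HN; auto. simpl. rewrite IHHN, HK; [lra|lia]. Qed.

Lemma Rabs_fsum_le f N : Rabs (fsum f N) <= fsum (fun k => Rabs (f k)) N.
Proof.
  induction N; simpl; [rewrite Rabs_R0; lra|].
  eapply Rle_trans; [apply Rabs_triang|]. lra.
Qed.

Lemma fsum_tail_le g h n N : (n <= N)%nat -> (forall m, (n < m <= N)%nat -> g m <= h m) ->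
  fsum g N - fsum g n <= fsum h N - fsum h n.
Proof.
  intros Hn. induction Hn; intros H; [lra|]. cbn [fsum].
  assert (g (S m) <= h (S m)) by (apply H; lia).
  assert (fsum g m - fsum g n <= fsum h m - fsum h n) by (apply IHHn; intros; apply H; lia). lra.
Qed.

Lemma sum_f_R0_fsum f N : sum_f_R0 (fun n => f (S n)) N = fsum f (S N).
Proof. induction N; simpl; [lra|]. rewrite IHN. simpl. lra. Qed.

Lemma sum_n_m_fsum f N : sum_n_m f 1 N = fsum f N.
Proof.
  induction N.
  - rewrite sum_n_m_zero; [reflexivity|lia].
  - rewrite sum_n_Sm; [|lia]. rewrite IHN. reflexivity.
Qed.

Lemma fsum_shift f n : fsum f (S n) = f 1%nat + fsum (fun l => f (S l)) n.
Proof. induction n; simpl in *; [lra|]. rewrite IHn. simpl. lra. Qed.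

Lemma fsum_rev f n : fsum f n = fsum (fun l => f (S n - l)%nat) n.
Proof.
  revert f. induction n; intros f; [reflexivity|].
  rewrite fsum_shift. cbn [fsum]. replace (S (S n) - S n)%nat with 1%nat by lia.
  rewrite (IHn (fun l => f (S l))). rewrite Rplus_comm. f_equal.
  apply fsum_ext. intros k Hk. f_equal. lia.
Qed.

Lemma fsum_triangle (F : nat -> nat -> R) N :
  fsum (fun k => fsum (fun l => F l (k - l)%nat) (k - 1)) N =
  fsum (fun l => fsum (fun m => F l m) (N - l)) N.
Proof.
  induction N; [reflexivity|].
  cbn [fsum]. rewrite IHN. replace (S N - 1)%nat with N by lia.
  replace (S N - S N)%nat with 0%nat by lia. cbn [fsum]. rewrite Rplus_0_r.
  assert (fsum (fun l => fsum (fun m => F l m) (S N - l)) N =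
          fsum (fun l => fsum (fun m => F l m) (N - l) + F l (S N - l)%nat) N).
  { apply fsum_ext. intros l Hl. replace (S N - l)%nat with (S (N - l)) by lia. cbn [fsum].
    replace (S (N - l)) with (S N - l)%nat by lia. reflexivity. }
  rewrite H, fsum_plus. ring.
Qed.

Lemma conv_fsum w k : conv w k = fsum (fun l => w l * w (k - l)%nat) (k - 1).
Proof. apply sum_n_m_fsum. Qed.

Lemma fsum_cvg_Series f : ex_series (fun n => f (S n)) ->
  forall eps, 0 < eps -> exists N0, forall N, (N0 <= N)%nat ->
    Rabs (fsum f N - Series (fun n => f (S n))) < eps.
Proof.
  intros Hex eps Heps.
  pose proof (Series_correct _ Hex) as Hs. apply is_series_Reals in Hs.
  destruct (Hs eps Heps) as [N0 HN0].
  exists (S N0). intros N HN. destruct N as [|N]; [lia|].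
  rewrite <- sum_f_R0_fsum. apply HN0. lia.
Qed.

Lemma fsum_le_Series f N : (forall k, (1 <= k)%nat -> 0 <= f k) ->
  ex_series (fun n => f (S n)) -> fsum f N <= Series (fun n => f (S n)).
Proof.
  intros Hp Hex.
  destruct (Rle_or_lt (fsum f N) (Series (fun n => f (S n)))) as [H|H]; auto.
  exfalso. set (d := fsum f N - Series (fun n => f (S n))).
  destruct (fsum_cvg_Series f Hex d) as [N0 HN0]; [unfold d; lra|].
  specialize (HN0 (Nat.max N0 N) ltac:(lia)).
  assert (fsum f N <= fsum f (Nat.max N0 N)) by (apply fsum_le_fsum_longer; auto; lia).
  apply Rabs_def2 in HN0. unfold d in *. lra.
Qed.

Lemma Series_le_of_fsum_le f B : ex_series (fun n => f (S n)) ->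
  (forall N, fsum f N <= B) -> Series (fun n => f (S n)) <= B.
Proof.
  intros Hex HB.
  destruct (Rle_or_lt (Series (fun n => f (S n))) B) as [H|H]; auto.
  exfalso. destruct (fsum_cvg_Series f Hex (Series (fun n => f (S n)) - B)) as [N0 HN0]; [lra|].
  specialize (HN0 N0 (le_n _)). specialize (HB N0). apply Rabs_def2 in HN0. lra.
Qed.

Lemma Series_finite_support f K : (forall k, (K < k)%nat -> f k = 0) ->
  Series (fun n => f (S n)) = fsum f K.
Proof.
  intros HK. apply is_series_unique, is_series_Reals.
  intros eps Heps. exists K. intros n Hn. rewrite sum_f_R0_fsum, (fsum_stable f K) by (auto; lia).
  unfold R_dist. rewrite Rminus_diag, Rabs_R0. lra.
Qed.

Definition right_deriv (h : R -> R) (x d : R) := forall eps, 0 < eps -> exists delta, 0 < delta /\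
  forall r, 0 < r < delta -> Rabs (h (x + r) - h x - r * d) <= eps * r.

Definition left_cont_from (h : R -> R) (a x : R) := forall eps, 0 < eps -> exists delta, 0 < delta /\
  forall y, x - delta < y <= x -> a <= y -> Rabs (h y - h x) <= eps.

Lemma continuous_eps_delta f x : continuous f x -> forall eps, 0 < eps -> exists delta, 0 < delta /\
  forall y, Rabs (y - x) < delta -> Rabs (f y - f x) < eps.
Proof.
  intros H eps Heps. apply continuity_pt_filterlim in H. destruct (H eps Heps) as [d [Hd Hy]].
  exists d. split; auto. intros y Hyd. destruct (Req_dec y x) as [->|E].
  - rewrite Rminus_diag, Rabs_R0. lra.
  - apply (Hy y). split; [split; [exact I|auto]|exact Hyd].
Qed.

Lemma left_cont_from_continuous h a x : continuous h x -> left_cont_from h a x.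
Proof.
  intros H eps Heps. destruct (continuous_eps_delta h x H eps Heps) as [d [Hd Hy]].
  exists d. split; auto. intros y Hy1 Hy2. left. apply Hy. apply Rabs_def1; lra.
Qed.

Lemma right_deriv_growth_le h a b eps : a <= b -> 0 < eps ->
  (forall x, a < x <= b -> left_cont_from h a x) ->
  (forall x, a <= x < b -> exists d, d <= 0 /\ right_deriv h x d) ->
  h b - h a <= eps * (b - a).
Proof.
  intros Hab Heps HLC HRD.
  set (E := fun y => a <= y <= b /\ forall z, a <= z <= y -> h z - h a <= eps * (z - a)).
  assert (HEa : E a) by (split; [lra|]; intros z Hz; replace z with a by lra; lra).
  assert (Hb : bound E) by (exists b; intros y [Hy _]; lra).
  destruct (completeness E Hb (ex_intro _ a HEa)) as [s0 [Hub Hlub]].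
  assert (Has0 : a <= s0) by (apply Hub; auto).
  assert (Hs0b : s0 <= b) by (apply Hlub; intros y [Hy _]; lra).
  assert (Hbelow : forall z, z < s0 -> exists y, E y /\ z < y).
  { intros z Hz. apply NNPP. intros Hn. assert (s0 <= z); [|lra].
    apply Hlub. intros y Hy. destruct (Rle_or_lt y z); auto. exfalso; eauto. }
  assert (Hs0 : h s0 - h a <= eps * (s0 - a)).
  { destruct (Req_dec s0 a) as [->|Hne]; [lra|].
    destruct (Rle_or_lt (h s0 - h a) (eps * (s0 - a))) as [Hok|Hbad]; auto. exfalso.
    set (eta := h s0 - h a - eps * (s0 - a)).
    destruct (HLC s0 ltac:(lra) (eta / 2) ltac:(unfold eta; lra)) as [dl [Hdl Hc]].
    destruct (Hbelow (Rmax a (s0 - dl))) as [y [[Hy1 Hy] Hyl]].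
    { unfold Rmax; destruct Rle_dec; lra. }
    assert (y <= s0) by (apply Hub; split; auto).
    assert (Hy' := Hy y ltac:(lra)).
    assert (Hcy : Rabs (h y - h s0) <= eta / 2).
    { apply Hc; [|lra]. split; [|lra]. apply Rle_lt_trans with (Rmax a (s0 - dl)); [apply Rmax_r|lra]. }
    apply Rabs_le_between in Hcy. unfold eta in *. nra. }
  assert (Hs0E : E s0).
  { split; [lra|]. intros z Hz. destruct (Rle_lt_or_eq_dec z s0 (proj2 Hz)) as [Hlt| ->]; auto.
    destruct (Hbelow z Hlt) as [y [[_ Hy] Hzy]]. apply Hy; lra. }
  destruct (Req_dec s0 b) as [<- | Hsb]; [apply (proj2 Hs0E); lra|].
  exfalso. destruct (HRD s0 ltac:(lra)) as [d [Hd Hrd]].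
  destruct (Hrd eps Heps) as [dr [Hdr Hr]].
  set (r := Rmin (dr / 2) (b - s0)).
  assert (Hr0 : 0 < r) by (apply Rmin_pos; lra).
  assert (Hr1 : r <= dr / 2) by apply Rmin_l.
  assert (Hr2 : r <= b - s0) by apply Rmin_r.
  assert (E (s0 + r)).
  { split; [lra|]. intros z Hz. destruct (Rle_or_lt z s0) as [Hz1|Hz1].
    - apply (proj2 Hs0E). lra.
    - specialize (Hr (z - s0) ltac:(lra)). replace (s0 + (z - s0)) with z in Hr by ring.
      apply Rabs_le_between in Hr. assert (0 < z - s0) by lra. nra. }
  assert (s0 + r <= s0) by (apply Hub; auto). lra.
Qed.

Lemma right_deriv_nonpos_le h a b : a <= b ->
  (forall x, a < x <= b -> left_cont_from h a x) ->
  (forall x, a <= x < b -> exists d, d <= 0 /\ right_deriv h x d) ->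
  h b <= h a.
Proof.
  intros Hab HLC HRD.
  destruct (Rle_or_lt (h b) (h a)) as [H|H]; auto. exfalso.
  destruct (Req_dec a b) as [->|Hne]; [lra|].
  set (eps := (h b - h a) / (2 * (b - a))).
  assert (Heps : 0 < eps) by (unfold eps; apply Rdiv_lt_0_compat; lra).
  pose proof (right_deriv_growth_le h a b eps Hab Heps HLC HRD) as Hg.
  unfold eps in Hg. field_simplify in Hg; lra.
Qed.

Lemma right_deriv_zero_eq h a b : a <= b ->
  (forall x, a < x <= b -> left_cont_from h a x) ->
  (forall x, a <= x < b -> right_deriv h x 0) ->
  h b = h a.
Proof.
  intros Hab HLC HRD. apply Rle_antisym.
  - apply right_deriv_nonpos_le; auto. intros x Hx; exists 0; split; [lra|auto].
  - assert (- h b <= - h a); [|lra].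
    apply (right_deriv_nonpos_le (fun x => - h x)); auto.
    + intros x Hx eps Heps. destruct (HLC x Hx eps Heps) as [d [Hd H]]. exists d; split; auto.
      intros y Hy Hay. rewrite <- Rabs_Ropp. replace (- (- h y - - h x)) with (h y - h x) by ring. auto.
    + intros x Hx. exists 0. split; [lra|]. intros eps Heps.
      destruct (HRD x Hx eps Heps) as [d [Hd H]]. exists d; split; auto. intros r Hr.
      rewrite <- Rabs_Ropp. replace (- (- h (x + r) - - h x - r * 0)) with (h (x + r) - h x - r * 0) by ring.
      auto.
Qed.

Lemma right_deriv_ext f g x d d' : (forall r, 0 <= r -> f (x + r) = g (x + r)) -> d = d' ->
  right_deriv f x d -> right_deriv g x d'.
Proof.
  intros He <- H eps Heps. destruct (H eps Heps) as [del [Hd Hr]]. exists del; split; auto.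
  intros r Hr'. rewrite <- !He by lra. replace (g x) with (f x); [now apply Hr|].
  rewrite <- (Rplus_0_r x). now apply He.
Qed.

Lemma right_deriv_of_is_derive f x d : is_derive f x d -> right_deriv f x d.
Proof.
  intros H eps Heps. apply is_derive_Reals in H.
  destruct (H eps Heps) as [del Hdel]. exists del. split; [apply cond_pos|].
  intros r Hr. specialize (Hdel r ltac:(lra) ltac:(rewrite Rabs_pos_eq; lra)).
  replace (f (x + r) - f x - r * d) with (r * ((f (x + r) - f x) / r - d)) by (field; lra).
  rewrite Rabs_mult, Rabs_pos_eq by lra. rewrite Rmult_comm. apply Rmult_le_compat_r; lra.
Qed.

Lemma right_deriv_plus f g x df dg : right_deriv f x df -> right_deriv g x dg ->
  right_deriv (fun y => f y + g y) x (df + dg).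
Proof.
  intros Hf Hg eps Heps.
  destruct (Hf (eps / 2) ltac:(lra)) as [d1 [Hd1 H1]]. destruct (Hg (eps / 2) ltac:(lra)) as [d2 [Hd2 H2]].
  exists (Rmin d1 d2). split; [apply Rmin_pos; auto|]. intros r Hr.
  assert (r < d1) by (pose proof (Rmin_l d1 d2); lra). assert (r < d2) by (pose proof (Rmin_r d1 d2); lra).
  specialize (H1 r ltac:(lra)). specialize (H2 r ltac:(lra)).
  apply Rabs_le_between in H1. apply Rabs_le_between in H2. apply Rabs_le. lra.
Qed.

Lemma right_deriv_scal c f x d : right_deriv f x d -> right_deriv (fun y => c * f y) x (c * d).
Proof.
  intros Hf eps Heps.
  assert (Hc : 0 < Rabs c + 1) by (pose proof (Rabs_pos c); lra).
  destruct (Hf (eps / (Rabs c + 1))) as [d1 [Hd1 H1]]; [apply Rdiv_lt_0_compat; lra|].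
  exists d1. split; auto. intros r Hr. specialize (H1 r Hr).
  replace (c * f (x + r) - c * f x - r * (c * d)) with (c * (f (x + r) - f x - r * d)) by ring.
  rewrite Rabs_mult.
  apply Rle_trans with ((Rabs c + 1) * (eps / (Rabs c + 1) * r)).
  - apply Rmult_le_compat; try lra; apply Rabs_pos.
  - right. field. lra.
Qed.

Lemma right_deriv_bound f x d : right_deriv f x d -> exists delta, 0 < delta /\
  forall r, 0 < r < delta -> Rabs (f (x + r) - f x) <= r * (Rabs d + 1).
Proof.
  intros Hf. destruct (Hf 1 Rlt_0_1) as [delta [Hdelta H]]. exists delta; split; auto.
  intros r Hr. specialize (H r Hr).
  replace (f (x + r) - f x) with ((f (x + r) - f x - r * d) + r * d) by ring.
  eapply Rle_trans; [apply Rabs_triang|]. rewrite Rabs_mult, (Rabs_pos_eq r) by lra. lra.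
Qed.

Lemma right_deriv_comp g f x d dg : right_deriv f x d -> is_derive g (f x) dg ->
  right_deriv (fun y => g (f y)) x (d * dg).
Proof.
  intros Hf Hg eps Heps. apply is_derive_Reals in Hg.
  set (B := Rabs d + 1). set (C := B + Rabs dg).
  assert (HB : 1 <= B) by (unfold B; pose proof (Rabs_pos d); lra).
  assert (HC : B <= C) by (unfold C; pose proof (Rabs_pos dg); lra).
  set (e := eps / C).
  assert (He : 0 < e) by (apply Rdiv_lt_0_compat; lra).
  destruct (Hg e He) as [de Hde].
  destruct (Hf e He) as [d1 [Hd1 H1]].
  destruct (right_deriv_bound f x d Hf) as [d2 [Hd2 H2]].
  assert (Hd3 : 0 < de / B) by (apply Rdiv_lt_0_compat; [apply cond_pos|lra]).
  exists (Rmin (Rmin d1 d2) (de / B)). split; [repeat apply Rmin_pos; auto|]. intros r Hr.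
  pose proof (Rmin_l (Rmin d1 d2) (de / B)). pose proof (Rmin_r (Rmin d1 d2) (de / B)).
  pose proof (Rmin_l d1 d2). pose proof (Rmin_r d1 d2).
  set (h := f (x + r) - f x).
  assert (Hh : Rabs (h - r * d) <= e * r) by (apply H1; lra).
  assert (Hhb : Rabs h <= r * B) by (apply H2; lra).
  assert (Hhde : Rabs h < de).
  { apply Rle_lt_trans with (r * B); auto.
    apply Rlt_le_trans with (de / B * B); [apply Rmult_lt_compat_r; lra|right; field; lra]. }
  assert (Hgh : Rabs (g (f x + h) - g (f x) - h * dg) <= e * Rabs h).
  { destruct (Req_dec h 0) as [->|Hh0].
    - rewrite Rplus_0_r, Rabs_R0. replace (g (f x) - g (f x) - 0 * dg) with 0 by ring.
      rewrite Rabs_R0. lra.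
    - replace (g (f x + h) - g (f x) - h * dg) with (h * ((g (f x + h) - g (f x)) / h - dg)) by (field; auto).
      rewrite Rabs_mult, Rmult_comm. apply Rmult_le_compat_r; [apply Rabs_pos|].
      left. now apply Hde. }
  replace (g (f (x + r)) - g (f x) - r * (d * dg)) with
    ((g (f x + h) - g (f x) - h * dg) + (h - r * d) * dg) by (unfold h; rewrite Rplus_minus; ring).
  eapply Rle_trans; [apply Rabs_triang|]. rewrite Rabs_mult.
  assert (e * Rabs h <= e * (r * B)) by (apply Rmult_le_compat_l; lra).
  assert (Rabs (h - r * d) * Rabs dg <= e * r * Rabs dg) by (apply Rmult_le_compat_r; [apply Rabs_pos|lra]).
  assert (e * r * C = eps * r) by (unfold e; field; lra).
  unfold C in *. lra.
Qed.

Lemma right_deriv_mult f g x df dg : right_deriv f x df -> right_deriv g x dg ->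
  right_deriv (fun y => f y * g y) x (df * g x + f x * dg).
Proof.
  intros Hf Hg.
  (* polarization: f g = ((f + g)^2 - (f - g)^2) / 4 *)
  assert (Hsq : forall h dh, right_deriv h x dh -> right_deriv (fun y => h y ^ 2) x (dh * (2 * h x))).
  { intros h dh Hh. apply (right_deriv_comp (fun z => z ^ 2) h); auto.
    auto_derive; auto. ring. }
  assert (Hmg := right_deriv_scal (-1) g x dg Hg).
  pose proof (Hsq _ _ (right_deriv_plus f g x df dg Hf Hg)) as Hp.
  pose proof (Hsq _ _ (right_deriv_plus _ _ x df _ Hf Hmg)) as Hm.
  pose proof (right_deriv_scal (/ 4) _ x _ (right_deriv_plus _ _ x _ _ Hp (right_deriv_scal (-1) _ x _ Hm))).
  eapply right_deriv_ext; [| |eassumption]; intros; simpl; field.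
Qed.

Lemma count_levels n d y : 0 < d -> 0 <= y <= (INR n + 1) * d ->
  let s := fsum (fun j => if Rle_dec (INR j * d) y then 1 else 0) n in
  s * d <= y <= s * d + d.
Proof.
  intros Hd. induction n; intros Hy s.
  - unfold s; simpl. simpl in Hy. lra.
  - destruct (Rle_or_lt (INR (S n) * d) y) as [H1|H1].
    + assert (Hs : s = INR (S n)).
      { unfold s. rewrite <- (Rmult_1_r (INR (S n))), <- fsum_const. apply fsum_ext. intros k Hk.
        destruct (Rle_dec (INR k * d) y) as [|Hn]; auto. exfalso. apply Hn.
        apply Rle_trans with (INR (S n) * d); auto. apply Rmult_le_compat_r; [lra|]. apply le_INR; lia. }
      rewrite Hs. rewrite S_INR in *. lra.
    + assert (Hs : s = fsum (fun j => if Rle_dec (INR j * d) y then 1 else 0) n).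
      { unfold s. cbn [fsum]. destruct (Rle_dec (INR (S n) * d) y); lra. }
      rewrite Hs. apply IHn. rewrite S_INR in H1. lra.
Qed.

Lemma ex_RInt_fsum (F : nat -> R -> R) a b n : (forall j, ex_RInt (F j) a b) ->
  ex_RInt (fun x => fsum (fun j => F j x) n) a b.
Proof.
  intros H. induction n; simpl.
  - apply ex_RInt_const.
  - apply (ex_RInt_plus (fun x => fsum (fun j => F j x) n) (F (S n))); auto.
Qed.

Section Monotone.
Variables (f : R -> R) (a b : R).
Hypothesis Hab : a <= b.
Hypothesis Hmono : forall x y, a <= x -> x <= y -> y <= b -> f y <= f x.

Let clamp x := Rmin b (Rmax a x).
Let fe x := f (clamp x).

Lemma clamp_in x : a <= clamp x <= b.
Proof. unfold clamp, Rmin, Rmax; repeat destruct Rle_dec; lra. Qed.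

Lemma clamp_id x : a <= x <= b -> clamp x = x.
Proof. unfold clamp, Rmin, Rmax; repeat destruct Rle_dec; lra. Qed.

Lemma fe_nonincr x y : x <= y -> fe y <= fe x.
Proof.
  intros H. unfold fe. pose proof (clamp_in x); pose proof (clamp_in y). apply Hmono; try tauto.
  unfold clamp, Rmin, Rmax; repeat destruct Rle_dec; lra.
Qed.

Lemma fe_bounds x : f b <= fe x <= f a.
Proof. unfold fe. pose proof (clamp_in x). split; apply Hmono; lra. Qed.

Let ind c x := if Rle_dec c (fe x) then 1 else 0.

(* the level set {fe >= c} is an initial segment of [a, b] *)
Lemma ex_RInt_level_indicator c : ex_RInt (ind c) a b.
Proof.
  destruct (Rle_or_lt c (f a)) as [Hc|Hc].
  - set (D := fun y => a <= y <= b /\ c <= fe y).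
    assert (HDa : D a) by (split; [lra|]; unfold fe; rewrite clamp_id; lra).
    assert (HbD : bound D) by (exists b; intros y [Hy _]; lra).
    destruct (completeness D HbD (ex_intro _ a HDa)) as [tau [Hub Hlub]].
    assert (a <= tau) by (apply Hub; auto).
    assert (tau <= b) by (apply Hlub; intros y [Hy _]; lra).
    apply ex_RInt_Chasles with tau.
    + apply ex_RInt_ext with (fun _ => 1); [|apply ex_RInt_const].
      intros x Hx. rewrite Rmin_left in Hx by lra. rewrite Rmax_right in Hx by lra.
      unfold ind. destruct (Rle_dec c (fe x)) as [|Hn]; auto. exfalso.
      destruct (classic (exists z, D z /\ x < z)) as [[z [[_ Hz] Hxz]]|Hne].
      * apply Hn. eapply Rle_trans; [apply Hz|]. apply fe_nonincr; lra.
      * assert (tau <= x); [|lra]. apply Hlub. intros y Hy.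
        destruct (Rle_or_lt y x); auto. exfalso; eauto.
    + apply ex_RInt_ext with (fun _ => 0); [|apply ex_RInt_const].
      intros x Hx. rewrite Rmin_left in Hx by lra. rewrite Rmax_right in Hx by lra.
      unfold ind. destruct (Rle_dec c (fe x)) as [Hy|]; auto. exfalso.
      assert (x <= tau) by (apply Hub; split; [lra|auto]). lra.
  - apply ex_RInt_ext with (fun _ => 0); [|apply ex_RInt_const].
    intros x _. unfold ind. destruct (Rle_dec c (fe x)); auto. pose proof (fe_bounds x). lra.
Qed.

(* step function with n levels of height dl n, within dl n of fe *)
Let dl n := (f a - f b) / (INR n + 1).
Let step n x := f b + dl n * fsum (fun j => ind (f b + INR j * dl n) x) n.

Lemma step_approx n x : Rabs (step n x - fe x) <= dl n.
Proof.
  pose proof (fe_bounds x) as Hfe. pose proof (pos_INR n).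
  assert (HD : f b <= f a) by (apply Hmono; lra).
  destruct (Req_dec (f a) (f b)) as [HD0|HD0].
  - unfold step, dl. rewrite HD0, Rminus_diag. unfold Rdiv. rewrite !Rmult_0_l.
    apply Rabs_le. lra.
  - assert (Hd : 0 < dl n) by (unfold dl; apply Rdiv_lt_0_compat; lra).
    assert (Hy : 0 <= fe x - f b <= (INR n + 1) * dl n) by (unfold dl; split; [|field_simplify]; lra).
    pose proof (count_levels n (dl n) (fe x - f b) Hd Hy) as Hc. simpl in Hc.
    assert (Heq : fsum (fun j => ind (f b + INR j * dl n) x) n =
                  fsum (fun j => if Rle_dec (INR j * dl n) (fe x - f b) then 1 else 0) n).
    { apply fsum_ext. intros k _. unfold ind.
      destruct (Rle_dec (f b + INR k * dl n) (fe x)); destruct (Rle_dec (INR k * dl n) (fe x - f b)); lra. }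
    unfold step. rewrite Heq. apply Rabs_le. nra.
Qed.

Lemma ex_RInt_monotone : ex_RInt f a b.
Proof.
  assert (Hint : forall n, is_RInt (step n) a b (RInt (step n) a b)).
  { intros n. apply (@RInt_correct R_CompleteNormedModule). unfold step.
    apply (ex_RInt_plus (fun _ => f b) (fun x => dl n * fsum (fun j => ind (f b + INR j * dl n) x) n)).
    - apply ex_RInt_const.
    - apply (ex_RInt_scal (fun x => fsum (fun j => ind (f b + INR j * dl n) x) n)).
      apply ex_RInt_fsum. intros j. apply ex_RInt_level_indicator. }
  destruct (filterlim_RInt step a b eventually eventually_filter fe (fun n => RInt (step n) a b) Hint)
    as [If [_ HIf]].
  - apply filterlim_locally. intros eps. pose proof (cond_pos eps).
    assert (HD : 0 <= f a - f b) by (pose proof (Hmono a b); lra).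
    destruct (archimed ((f a - f b) / eps)) as [Harch _].
    assert (Hz : (0 <= up ((f a - f b) / eps))%Z).
    { apply le_IZR. assert (0 <= (f a - f b) / eps) by (apply Rdiv_le_0_compat; lra). simpl. lra. }
    exists (Z.to_nat (up ((f a - f b) / eps))). intros n Hn t.
    change (Rabs (step n t - fe t) < eps).
    eapply Rle_lt_trans; [apply step_approx|]. unfold dl.
    apply le_INR in Hn. rewrite INR_IZR_INZ, Z2Nat.id in Hn by auto.
    pose proof (pos_INR n).
    apply Rmult_lt_reg_r with (INR n + 1); [lra|].
    unfold Rdiv. rewrite Rmult_assoc, Rinv_l, Rmult_1_r by lra.
    apply Rmult_lt_reg_r with (/ eps); [apply Rinv_0_lt_compat; lra|].
    replace (eps * (INR n + 1) * / eps) with (INR n + 1) by (field; lra).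
    unfold Rdiv in Harch. lra.
  - exists If. apply is_RInt_ext with fe; auto.
    intros x Hx. rewrite Rmin_left in Hx by lra. rewrite Rmax_right in Hx by lra.
    unfold fe. now rewrite clamp_id by lra.
Qed.

End Monotone.

Lemma is_RInt_dist_const f x y I c eps : x <= y -> is_RInt f x y I ->
  (forall z, x <= z <= y -> Rabs (f z - c) <= eps) -> Rabs (I - (y - x) * c) <= eps * (y - x).
Proof.
  intros Hxy HI Hb.
  assert (H1 : is_RInt (fun z => f z - c) x y (I - (y - x) * c)).
  { apply (is_RInt_minus f (fun _ => c) x y I ((y - x) * c)); auto. apply (is_RInt_const x y c). }
  pose proof (abs_RInt_le_const (fun z => f z - c) x y eps Hxy (ex_intro _ _ H1) Hb) as H.
  rewrite (is_RInt_unique _ _ _ _ H1) in H. lra.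
Qed.

Lemma is_derive_RInt_continuous (f : R -> R) a x : (forall y, continuous f y) ->
  is_derive (RInt f a) x (f x).
Proof.
  intros Hf. apply (is_derive_RInt f (RInt f a) a x); auto.
  exists (mkposreal 1 Rlt_0_1). intros y _. apply (@RInt_correct R_CompleteNormedModule).
  apply (@ex_RInt_continuous R_CompleteNormedModule). auto.
Qed.

Lemma continuous_of_lipschitz f x L : 0 <= L ->
  (forall y, Rabs (f y - f x) <= L * Rabs (y - x)) -> continuous f x.
Proof.
  intros HL H. apply continuity_pt_filterlim. intros eps Heps.
  exists (eps / (L + 1)). split; [apply Rdiv_lt_0_compat; lra|].
  intros y [_ Hy]. simpl in *. unfold R_dist in *.
  eapply Rle_lt_trans; [apply H|].
  apply Rle_lt_trans with (L * (eps / (L + 1))); [apply Rmult_le_compat_l; lra|].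
  apply Rmult_lt_reg_r with (L + 1); [lra|]. field_simplify; nra.
Qed.

Lemma continuous_fsum (F : nat -> R -> R) N x :
  (forall k, (1 <= k <= N)%nat -> continuous (F k) x) ->
  continuous (fun y => fsum (fun k => F k y) N) x.
Proof.
  induction N; intros H; simpl.
  - apply continuous_const.
  - apply (continuous_plus (fun y => fsum (fun k => F k y) N) (F (S N))).
    + apply IHN; intros; apply H; lia.
    + apply H; lia.
Qed.

Lemma is_derive_fsum (F dF : nat -> R -> R) N x :
  (forall k, (1 <= k <= N)%nat -> is_derive (F k) x (dF k x)) ->
  is_derive (fun y => fsum (fun k => F k y) N) x (fsum (fun k => dF k x) N).
Proof.
  induction N; intros H; simpl.
  - apply (is_derive_const 0).
  - apply (is_derive_plus (fun y => fsum (fun k => F k y) N) (F (S N))).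
    + apply IHN; intros; apply H; lia.
    + apply H; lia.
Qed.

Lemma le_of_continuous_left f c B : continuous f c -> (forall y, y < c -> f y <= B) -> f c <= B.
Proof.
  intros Hc H. destruct (Rle_or_lt (f c) B) as [|Hlt]; auto. exfalso.
  destruct (continuous_eps_delta f c Hc (f c - B) ltac:(lra)) as [d [Hd Hy]].
  specialize (Hy (c - d / 2) ltac:(rewrite Rabs_left; lra)). apply Rabs_def2 in Hy.
  specialize (H (c - d / 2) ltac:(lra)). lra.
Qed.

Lemma exp_le_exp x y : x <= y -> exp x <= exp y.
Proof. intros [H| ->]; [left; now apply exp_increasing|lra]. Qed.

Lemma exp_neg_le_1 x : 0 <= x -> exp (- x) <= 1.
Proof. intros H. rewrite <- exp_0. apply exp_le_exp. lra. Qed.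

Lemma one_minus_exp_neg_le z : 1 - exp (- z) <= z.
Proof. pose proof (exp_ineq1_le (- z)). lra. Qed.

Lemma exp_secant_lower c y1 y2 : 0 < c -> y1 < y2 ->
  c * exp (c * y1) * (y2 - y1) < exp (c * y2) - exp (c * y1).
Proof.
  intros Hc Hy. replace (c * y2) with (c * y1 + c * (y2 - y1)) by ring. rewrite exp_plus.
  pose proof (exp_ineq1 (c * (y2 - y1)) ltac:(nra)). pose proof (exp_pos (c * y1)). nra.
Qed.

Lemma exp_secant_upper c y1 y2 : 0 < c -> y1 < y2 ->
  exp (c * y2) - exp (c * y1) < c * exp (c * y2) * (y2 - y1).
Proof.
  intros Hc Hy. replace (c * y1) with (c * y2 + - (c * (y2 - y1))) by ring. rewrite exp_plus.
  pose proof (exp_ineq1 (- (c * (y2 - y1))) ltac:(nra)). pose proof (exp_pos (c * y2)). nra.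
Qed.

(* k q^{2k} <= q^k / (1 - q) with q = e^{-del/2}, since k q^k <= sum_{i<k} q^i *)
Lemma INR_mul_exp_le j del : 0 < del ->
  INR j * exp (- (INR j * del)) <= exp (- (INR j * del / 2)) / (1 - exp (- (del / 2))).
Proof.
  intros Hdel. set (s := exp (- (del / 2))).
  assert (Hs0 : 0 < s) by apply exp_pos.
  assert (Hs1 : s < 1) by (unfold s; rewrite <- exp_0; apply exp_increasing; lra).
  assert (Hpow : forall i, exp (- (INR i * del / 2)) = s ^ i).
  { intros i. induction i.
    - simpl. unfold Rdiv. rewrite !Rmult_0_l, Ropp_0, exp_0. reflexivity.
    - rewrite S_INR. simpl. rewrite <- IHi. unfold s. rewrite <- exp_plus. f_equal. field. }
  assert (Hsq : exp (- (INR j * del)) = s ^ j * s ^ j).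
  { rewrite <- !Hpow, <- exp_plus. f_equal. field. }
  rewrite Hsq, Hpow.
  assert (Hj : INR j * s ^ j <= / (1 - s)).
  { assert (H1 : forall n, INR n * s ^ n <= sum_f_R0 (fun i => s ^ i) n - s ^ n).
    { induction n; [simpl; lra|]. rewrite S_INR. simpl (s ^ S n). simpl (sum_f_R0 (fun i => s ^ i) (S n)).
      assert (0 <= s ^ n) by (apply pow_le; lra).
      assert (INR n * (s * s ^ n) <= INR n * s ^ n) by (pose proof (pos_INR n); apply Rmult_le_compat_l; nra).
      assert (s * s ^ n <= s ^ n) by nra. lra. }
    pose proof (H1 j) as H. rewrite tech3 in H by lra.
    assert (0 <= s ^ S j) by (apply pow_le; lra). assert (0 <= s ^ j) by (apply pow_le; lra).
    assert ((1 - s ^ S j) / (1 - s) <= / (1 - s)).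
    { unfold Rdiv. rewrite <- (Rmult_1_l (/ (1 - s))) at 2. apply Rmult_le_compat_r; [|lra].
      left; apply Rinv_0_lt_compat; lra. }
    lra. }
  assert (0 <= s ^ j) by (apply pow_le; lra).
  replace (INR j * (s ^ j * s ^ j)) with (s ^ j * (INR j * s ^ j)) by ring.
  unfold Rdiv. apply Rmult_le_compat_l; auto.
Qed.

Lemma INR_mul_exp_le_inv j del : 0 < del ->
  INR j * exp (- (INR j * del)) <= / (1 - exp (- (del / 2))).
Proof.
  intros Hdel. eapply Rle_trans; [now apply INR_mul_exp_le|].
  assert (exp (- (del / 2)) < 1) by (rewrite <- exp_0; apply exp_increasing; lra).
  unfold Rdiv. rewrite <- (Rmult_1_l (/ (1 - _))) at 2.
  apply Rmult_le_compat_r; [left; apply Rinv_0_lt_compat; lra|].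
  apply exp_neg_le_1. pose proof (pos_INR j). nra.
Qed.

Lemma exp_neg_INR_small d eta : 0 < d -> 0 < eta ->
  exists N0, forall N, (N0 <= N)%nat -> exp (- (INR N * d)) <= eta.
Proof.
  intros Hd He.
  destruct (archimed (/ (eta * d))) as [Harch _].
  assert (Hz : (0 <= up (/ (eta * d)))%Z).
  { apply le_IZR. assert (0 < / (eta * d)) by (apply Rinv_0_lt_compat; nra). simpl. lra. }
  exists (Z.to_nat (up (/ (eta * d)))). intros N HN.
  apply le_INR in HN. rewrite INR_IZR_INZ, Z2Nat.id in HN by auto.
  assert (Hx : / eta <= INR N * d).
  { apply Rle_trans with (/ (eta * d) * d); [right; field; lra|].
    apply Rmult_le_compat_r; lra. }
  pose proof (exp_ineq1_le (INR N * d)).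
  rewrite exp_Ropp. replace eta with (/ / eta) by (field; lra).
  apply Rinv_le_contravar; [apply Rinv_0_lt_compat|]; lra.
Qed.

(** * The moment generating function of the initial data *)

Section Mgf.
Variables (a : nat -> R) (K k0 : nat).
Hypothesis Ha : forall k, (1 <= k)%nat -> 0 <= a k.
Hypothesis Hk0 : (1 <= k0 <= K)%nat.
Hypothesis Hak0 : 0 < a k0.

Definition mgf u := fsum (fun k => a k * exp (INR k * u)) K.
Definition dmgf u := fsum (fun k => INR k * a k * exp (INR k * u)) K.

Lemma INR_pos k : (1 <= k)%nat -> 0 < INR k.
Proof. intros; apply lt_0_INR; lia. Qed.

Lemma dmgf_term_nonneg u k : (1 <= k)%nat -> 0 <= INR k * a k * exp (INR k * u).
Proof.
  intros Hk. pose proof (Ha k Hk). pose proof (INR_pos k Hk). pose proof (exp_pos (INR k * u)).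
  apply Rmult_le_pos; [apply Rmult_le_pos|]; lra.
Qed.

Lemma mgf_pos u : 0 < mgf u.
Proof.
  unfold mgf. apply Rlt_le_trans with (a k0 * exp (INR k0 * u)).
  - pose proof (exp_pos (INR k0 * u)). nra.
  - apply (fsum_term_le (fun k => a k * exp (INR k * u))); auto. intros k Hk.
    pose proof (Ha k ltac:(lia)). pose proof (exp_pos (INR k * u)). nra.
Qed.

Lemma dmgf_pos u : 0 < dmgf u.
Proof.
  unfold dmgf. apply Rlt_le_trans with (INR k0 * a k0 * exp (INR k0 * u)).
  - pose proof (exp_pos (INR k0 * u)). pose proof (INR_pos k0 ltac:(lia)).
    assert (0 < INR k0 * a k0) by nra. nra.
  - apply (fsum_term_le (fun k => INR k * a k * exp (INR k * u))); auto. intros k Hk.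
    apply dmgf_term_nonneg. lia.
Qed.

Lemma mgf_secant u1 u2 : u1 < u2 ->
  dmgf u1 * (u2 - u1) < mgf u2 - mgf u1 < dmgf u2 * (u2 - u1).
Proof.
  intros Hu. unfold mgf, dmgf. rewrite <- !fsum_minus, !fsum_scal_r.
  pose proof (INR_pos k0 ltac:(lia)).
  split; apply fsum_lt with k0; auto.
  - intros k Hk. pose proof (Ha k ltac:(lia)). pose proof (exp_secant_lower (INR k) u1 u2 (INR_pos k ltac:(lia)) Hu). nra.
  - pose proof (exp_secant_lower (INR k0) u1 u2 ltac:(lra) Hu). nra.
  - intros k Hk. pose proof (Ha k ltac:(lia)). pose proof (exp_secant_upper (INR k) u1 u2 (INR_pos k ltac:(lia)) Hu). nra.
  - pose proof (exp_secant_upper (INR k0) u1 u2 ltac:(lra) Hu). nra.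
Qed.

Lemma dmgf_lt u1 u2 : u1 < u2 -> dmgf u1 < dmgf u2.
Proof.
  intros Hu. unfold dmgf. apply fsum_lt with k0; auto.
  - intros k Hk. pose proof (Ha k ltac:(lia)). pose proof (INR_pos k ltac:(lia)).
    assert (exp (INR k * u1) < exp (INR k * u2)) by (apply exp_increasing; nra).
    assert (0 <= INR k * a k) by nra. nra.
  - pose proof (INR_pos k0 ltac:(lia)).
    assert (exp (INR k0 * u1) < exp (INR k0 * u2)) by (apply exp_increasing; nra).
    assert (0 < INR k0 * a k0) by nra. nra.
Qed.

Lemma dmgf_le u1 u2 : u1 <= u2 -> dmgf u1 <= dmgf u2.
Proof. intros [H| ->]; [left; now apply dmgf_lt|lra]. Qed.

Lemma is_derive_mgf u : is_derive mgf u (dmgf u).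
Proof.
  apply (is_derive_fsum (fun k y => a k * exp (INR k * y)) (fun k y => INR k * a k * exp (INR k * y))).
  intros k _. auto_derive; auto. ring.
Qed.

Lemma continuous_mgf u : continuous mgf u.
Proof. apply (@ex_derive_continuous R_AbsRing R_NormedModule). eexists; apply is_derive_mgf. Qed.

Lemma continuous_dmgf u : continuous dmgf u.
Proof.
  apply (continuous_fsum (fun k y => INR k * a k * exp (INR k * y))).
  intros k _. apply (@ex_derive_continuous R_AbsRing R_NormedModule). auto_derive; auto.
Qed.

Lemma dmgf_le_exp u : u <= 0 -> dmgf u <= exp u * dmgf 0.
Proof.
  intros Hu. unfold dmgf. rewrite <- fsum_scal. apply fsum_le. intros k Hk.
  pose proof (Ha k ltac:(lia)). pose proof (INR_pos k ltac:(lia)).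
  rewrite Rmult_0_r, exp_0.
  assert (1 <= INR k) by (apply (le_INR 1); lia).
  assert (exp (INR k * u) <= exp u) by (apply exp_le_exp; nra).
  assert (0 <= INR k * a k) by nra. nra.
Qed.

Lemma dmgf_ge_exp u : 0 <= u -> INR k0 * a k0 * exp u <= dmgf u.
Proof.
  intros Hu. apply Rle_trans with (INR k0 * a k0 * exp (INR k0 * u)).
  - pose proof (INR_pos k0 ltac:(lia)). assert (1 <= INR k0) by (apply (le_INR 1); lia).
    apply Rmult_le_compat_l; [nra|]. apply exp_le_exp. nra.
  - apply (fsum_term_le (fun k => INR k * a k * exp (INR k * u))); auto.
    intros k Hk. apply dmgf_term_nonneg. lia.
Qed.

Lemma dmgf_level_ex t : 0 < t -> exists w, t * dmgf w = 1.
Proof.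
  intros Ht. set (c0 := INR k0 * a k0).
  assert (Hc0 : 0 < c0) by (unfold c0; pose proof (INR_pos k0 ltac:(lia)); nra).
  assert (Hp0 := dmgf_pos 0).
  set (lo := - Rabs (ln (t * dmgf 0))).
  assert (Hlo : t * dmgf lo <= 1).
  { assert (lo <= 0) by (unfold lo; pose proof (Rabs_pos (ln (t * dmgf 0))); lra).
    assert (exp lo <= / (t * dmgf 0)).
    { rewrite <- (exp_ln (/ (t * dmgf 0))) by (apply Rinv_0_lt_compat; nra). apply exp_le_exp.
      rewrite ln_Rinv by nra. unfold lo. pose proof (Rle_abs (ln (t * dmgf 0))). lra. }
    pose proof (dmgf_le_exp lo ltac:(assumption)).
    apply Rle_trans with (t * (/ (t * dmgf 0) * dmgf 0)); [|right; field; lra].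
    apply Rmult_le_compat_l; [lra|]. eapply Rle_trans; [eassumption|]. apply Rmult_le_compat_r; lra. }
  set (hi := Rabs (ln (/ (t * c0)))).
  assert (Hhi : 1 <= t * dmgf hi).
  { assert (0 <= hi) by (unfold hi; apply Rabs_pos).
    assert (/ (t * c0) <= exp hi).
    { rewrite <- (exp_ln (/ (t * c0))) by (apply Rinv_0_lt_compat; nra). apply exp_le_exp, Rle_abs. }
    pose proof (dmgf_ge_exp hi ltac:(assumption)) as Hge. fold c0 in Hge.
    apply Rle_trans with (t * (c0 * / (t * c0))); [right; field; lra|].
    apply Rmult_le_compat_l; [lra|]. eapply Rle_trans; [|eassumption]. apply Rmult_le_compat_l; lra. }
  destruct (IVT_gen (fun w => t * dmgf w) lo hi 1) as [w [_ Hw]].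
  - intros x. apply continuity_pt_filterlim, (continuous_scal_r t dmgf), continuous_dmgf.
  - unfold Rmin, Rmax. destruct (Rle_dec _ _); lra.
  - now exists w.
Qed.

Lemma dmgf_level_unique t w1 w2 : t * dmgf w1 = 1 -> t * dmgf w2 = 1 -> w1 = w2.
Proof.
  intros H1 H2. assert (0 < t) by (pose proof (dmgf_pos w1); nra).
  destruct (Rtotal_order w1 w2) as [Hw|[Hw|Hw]]; auto; exfalso;
    pose proof (dmgf_lt _ _ Hw); nra.
Qed.

End Mgf.

(** * The coagulation gain *)

Definition coag_gain (b : nat -> R) N :=
  fsum (fun k => INR k / 2 * fsum (fun l => b l * b (k - l)%nat) (k - 1)) N.

(* sum_{k<=N} (k/2) sum_{l+m=k} b_l b_m = sum_{l<=N} b_l sum_{m<=N-l} m b_m, by symmetry in l, m *)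
Lemma coag_gain_eq b N : coag_gain b N = fsum (fun l => b l * fsum (fun m => INR m * b m) (N - l)) N.
Proof.
  unfold coag_gain.
  transitivity (fsum (fun k => fsum (fun l => b l * (INR (k - l) * b (k - l)%nat)) (k - 1)) N).
  - apply fsum_ext. intros k Hk.
    set (S1 := fsum (fun l => b l * (INR (k - l) * b (k - l)%nat)) (k - 1)).
    assert (Hrev : S1 = fsum (fun l => INR l * b l * b (k - l)%nat) (k - 1)).
    { unfold S1. rewrite fsum_rev. apply fsum_ext. intros l Hl.
      replace (S (k - 1) - l)%nat with (k - l)%nat by lia. replace (k - (k - l))%nat with l by lia. ring. }
    assert (Hsum : S1 + S1 = INR k * fsum (fun l => b l * b (k - l)%nat) (k - 1)).
    { rewrite Hrev at 2. unfold S1. rewrite <- fsum_plus, <- fsum_scal. apply fsum_ext. intros l Hl.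
      rewrite minus_INR by lia. ring. }
    lra.
  - rewrite (fsum_triangle (fun l m => b l * (INR m * b m))). apply fsum_ext. intros l Hl.
    now rewrite <- fsum_scal.
Qed.

Section CoagGain.
Variable b : nat -> R.
Hypothesis Hb : forall k, (1 <= k)%nat -> 0 <= b k.

Lemma coag_gain_le N : coag_gain b N <= fsum b N * fsum (fun m => INR m * b m) N.
Proof.
  rewrite coag_gain_eq, fsum_scal_r. apply fsum_le. intros l Hl. apply Rmult_le_compat_l; [apply Hb; lia|].
  apply fsum_le_fsum_longer; [|lia]. intros m Hm. pose proof (pos_INR m). pose proof (Hb m Hm). nra.
Qed.

Definition tail_factor del N := exp (- (INR N * del / 2)) / (1 - exp (- (del / 2))).

Variables (gam : nat -> R) (del : R).
Hypothesis Hdel : 0 < del.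
Hypothesis Hbg : forall k, (1 <= k)%nat -> b k <= gam k * exp (- (INR k * del)).

Lemma tail_factor_nonneg N : 0 <= tail_factor del N.
Proof.
  unfold tail_factor. apply Rdiv_le_0_compat; [apply Rlt_le, exp_pos|].
  assert (exp (- (del / 2)) < 1) by (rewrite <- exp_0; apply exp_increasing; lra). lra.
Qed.

Lemma tail_factor_le j N : (N <= j)%nat -> exp (- (INR j * del / 2)) / (1 - exp (- (del / 2))) <= tail_factor del N.
Proof.
  intros H. unfold tail_factor, Rdiv. apply Rmult_le_compat_r.
  - assert (exp (- (del / 2)) < 1) by (rewrite <- exp_0; apply exp_increasing; lra).
    left. apply Rinv_0_lt_compat. lra.
  - apply le_INR in H. apply exp_le_exp. nra.
Qed.

Lemma gam_nonneg k : (1 <= k)%nat -> 0 <= gam k.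
Proof. intros Hk. pose proof (Hb k Hk). pose proof (Hbg k Hk). pose proof (exp_pos (- (INR k * del))). nra. Qed.

(* the terms of (sum b)(sum m b_m) missing from the gain all have l + m > N *)
Lemma coag_gain_defect N :
  fsum b N * fsum (fun m => INR m * b m) N - coag_gain b N <= tail_factor del N * (fsum gam N * fsum gam N).
Proof.
  rewrite coag_gain_eq, fsum_scal_r, <- fsum_minus.
  set (g := fun m => INR m * b m).
  replace (tail_factor del N * (fsum gam N * fsum gam N)) with (fsum (fun l => tail_factor del N * gam l * fsum gam N) N)
    by (rewrite fsum_scal_r, <- fsum_scal; apply fsum_ext; intros; ring).
  apply fsum_le. intros l Hl.
  replace (b l * fsum g N - b l * fsum g (N - l)) with
    (fsum (fun m => b l * g m) N - fsum (fun m => b l * g m) (N - l)) by (rewrite !fsum_scal; ring).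
  apply Rle_trans with (fsum (fun m => tail_factor del N * gam l * gam m) N
                        - fsum (fun m => tail_factor del N * gam l * gam m) (N - l)).
  - apply fsum_tail_le; [lia|]. intros m Hm. unfold g.
    pose proof (Hb l ltac:(lia)). pose proof (Hb m ltac:(lia)). pose proof (Hbg l ltac:(lia)). pose proof (Hbg m ltac:(lia)).
    pose proof (gam_nonneg l ltac:(lia)). pose proof (gam_nonneg m ltac:(lia)). pose proof (pos_INR m).
    apply Rle_trans with (gam l * gam m * (INR m * (exp (- (INR l * del)) * exp (- (INR m * del))))).
    { replace (gam l * gam m * (INR m * (exp (- (INR l * del)) * exp (- (INR m * del))))) with
        ((gam l * exp (- (INR l * del))) * (INR m * (gam m * exp (- (INR m * del))))) by ring.
      apply Rmult_le_compat; auto. apply Rmult_le_pos; auto. apply Rmult_le_compat_l; auto. }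
    replace (tail_factor del N * gam l * gam m) with (gam l * gam m * tail_factor del N) by ring.
    apply Rmult_le_compat_l; [apply Rmult_le_pos; auto|].
    rewrite <- exp_plus. replace (- (INR l * del) + - (INR m * del)) with (- (INR (l + m) * del)) by (rewrite plus_INR; ring).
    apply Rle_trans with (INR (l + m) * exp (- (INR (l + m) * del))).
    + apply Rmult_le_compat_r; [apply Rlt_le, exp_pos|]. apply le_INR; lia.
    + eapply Rle_trans; [now apply INR_mul_exp_le|]. apply tail_factor_le. lia.
  - assert (0 <= fsum (fun m => tail_factor del N * gam l * gam m) (N - l)).
    { apply fsum_nonneg. intros m Hm. pose proof (tail_factor_nonneg N). pose proof (gam_nonneg l ltac:(lia)).
      pose proof (gam_nonneg m ltac:(lia)). apply Rmult_le_pos; [apply Rmult_le_pos|]; auto. }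
    rewrite fsum_scal. lra.
Qed.

End CoagGain.

(** * The profile u = t M - A determined by the moment relations *)

Section Profile.
Variables (M A G phi : R -> R).
Hypothesis HG : forall w1 w2, w1 < w2 -> phi w1 * (w2 - w1) < G w2 - G w1 < phi w2 * (w2 - w1).
Hypothesis Hphi_pos : forall w, 0 < phi w.
Hypothesis Hphi_lt : forall w1 w2, w1 < w2 -> phi w1 < phi w2.
Hypothesis HMG : forall s, 0 <= s -> M s = G (s * M s - A s).
Hypothesis Hphi_le1 : forall s, 0 <= s -> s * phi (s * M s - A s) <= 1.
Hypothesis HA : forall r s, 0 <= r -> r <= s -> (s - r) * M s <= A s - A r <= (s - r) * M r.
Hypothesis HA0 : A 0 = 0.

Definition uprof s := s * M s - A s.
Definition hfun s w := w - s * G w.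

Lemma phi_le w1 w2 : w1 <= w2 -> phi w1 <= phi w2.
Proof. intros [H| ->]; [left; auto|lra]. Qed.

Lemma G_lt w1 w2 : w1 < w2 -> G w1 < G w2.
Proof. intros H. pose proof (HG w1 w2 H). pose proof (Hphi_pos w1). nra. Qed.

Lemma uprof_0 : uprof 0 = 0.
Proof. unfold uprof. rewrite HA0. ring. Qed.

Lemma M_nonincr r s : 0 <= r -> r <= s -> M s <= M r.
Proof.
  intros Hr Hrs. destruct (HA r s Hr Hrs). destruct (Req_dec r s) as [->|Hne]; [lra|].
  destruct (Rle_or_lt (M s) (M r)); auto. assert ((s - r) * M r < (s - r) * M s) by (apply Rmult_lt_compat_l; lra). lra.
Qed.

Lemma uprof_nonpos s : 0 <= s -> uprof s <= 0.
Proof.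
  intros Hs. destruct (Rle_or_lt (uprof s) 0) as [|H]; auto. exfalso.
  pose proof (G_lt 0 (uprof s) H). pose proof (HMG s Hs). pose proof (HMG 0 (Rle_refl 0)).
  pose proof (M_nonincr 0 s (Rle_refl 0) Hs). rewrite Rmult_0_l, HA0, Rminus_0_r in *. unfold uprof in *. lra.
Qed.

Lemma uprof_nonincr r s : 0 <= r -> r <= s -> uprof s <= uprof r.
Proof.
  intros Hr Hrs. unfold uprof. destruct (HA r s Hr Hrs) as [H1 _].
  pose proof (M_nonincr r s Hr Hrs).
  assert (0 <= r * (M r - M s)) by (apply Rmult_le_pos; lra). nra.
Qed.

Lemma hfun_uprof_le r s : 0 <= r -> r <= s -> hfun s (uprof r) <= hfun s (uprof s).
Proof.
  intros Hr Hrs. unfold hfun, uprof. rewrite <- (HMG s), <- (HMG r) by lra.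
  destruct (HA r s Hr Hrs). nra.
Qed.

Lemma hfun_lt s w1 w2 : 0 <= s -> w1 < w2 -> s * phi w2 <= 1 -> hfun s w1 < hfun s w2.
Proof.
  intros Hs H12 Hp. unfold hfun. destruct (HG w1 w2 H12) as [_ Hh].
  destruct (Req_dec s 0) as [->|Hs0]; [lra|].
  assert (s * (G w2 - G w1) < s * (phi w2 * (w2 - w1))) by (apply Rmult_lt_compat_l; lra). nra.
Qed.

Lemma uprof_pre_gel t : 0 <= t -> t * phi 0 <= 1 -> uprof t = 0.
Proof.
  intros Ht Hp. destruct (uprof_nonpos t Ht) as [H|H]; auto. exfalso.
  pose proof (hfun_uprof_le 0 t (Rle_refl 0) Ht) as Hh. rewrite uprof_0 in Hh.
  pose proof (hfun_lt t (uprof t) 0 Ht H Hp). lra.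
Qed.

(* u cannot jump up at s0 from the right: the two relations give u(s0) - a <= s0 (G(u s0) - G a) < u(s0) - a *)
Lemma uprof_no_right_jump s0 t a : 0 <= s0 < t -> a < uprof s0 ->
  (forall r, s0 < r <= t -> uprof r = a) -> False.
Proof.
  intros Hs0 Ha Hr.
  set (g := G (uprof s0) - G a).
  assert (Hg : 0 < g) by (unfold g; pose proof (G_lt a (uprof s0) Ha); lra).
  assert (Hlim : uprof s0 - a <= s0 * g).
  { destruct (Rle_or_lt (uprof s0 - a) (s0 * g)) as [|Hgt]; auto. exfalso.
    set (d := Rmin (t - s0) ((uprof s0 - a - s0 * g) / (2 * g))).
    assert (Hd : 0 < d) by (apply Rmin_pos; [lra|apply Rdiv_lt_0_compat; lra]).
    assert (Hd1 : d <= t - s0) by apply Rmin_l.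
    assert (Hd2 : d * g <= (uprof s0 - a - s0 * g) / 2).
    { apply Rle_trans with ((uprof s0 - a - s0 * g) / (2 * g) * g); [apply Rmult_le_compat_r, Rmin_r; lra|].
      right; field; lra. }
    pose proof (hfun_uprof_le s0 (s0 + d) ltac:(lra) ltac:(lra)) as H.
    rewrite (Hr (s0 + d)) in H by lra. unfold hfun in H. unfold g in *. nra. }
  pose proof (hfun_lt s0 a (uprof s0) ltac:(lra) Ha (Hphi_le1 s0 ltac:(lra))) as H.
  unfold hfun, g in *. nra.
Qed.

(* u cannot jump down at s0 from the left from above b, since s0 phi(b) <= 1 *)
Lemma uprof_no_left_jump s0 a b : 0 < s0 -> a < b -> b < 0 -> s0 * phi b <= 1 -> uprof s0 = a ->
  (forall del, 0 < del -> exists r, s0 - del < r < s0 /\ b < uprof r) -> False.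
Proof.
  intros Hs0 Hab Hb0 Hphib Hus0 Happ.
  set (kap := hfun s0 b - hfun s0 a).
  assert (Hkap : 0 < kap) by (unfold kap; pose proof (hfun_lt s0 a b ltac:(lra) Hab Hphib); lra).
  set (del := Rmin (s0 / 2) (kap * s0 / (2 * (- b + 1)))).
  assert (Hdel : 0 < del) by (apply Rmin_pos; [lra|apply Rdiv_lt_0_compat; nra]).
  assert (Hdel1 : del <= s0 / 2) by apply Rmin_l.
  assert (Hdel2 : del <= kap * s0 / (2 * (- b + 1))) by apply Rmin_r.
  destruct (Happ del Hdel) as [r [[Hr1 Hr2] Hbr]].
  pose proof (hfun_uprof_le r s0 ltac:(lra) ltac:(lra)) as H. rewrite Hus0 in H.
  set (ur := uprof r) in *.
  assert (Hur0 : ur <= 0) by (apply uprof_nonpos; lra).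
  destruct (HG b ur Hbr) as [_ Hg2].
  assert (Hphir : phi ur <= / r).
  { apply Rmult_le_reg_l with r; [lra|]. rewrite Rinv_r by lra. now apply Hphi_le1; lra. }
  assert (Hst : hfun s0 ur - hfun s0 b >= (ur - b) * (1 - s0 / r)).
  { unfold hfun. assert (s0 * (G ur - G b) <= s0 * (phi ur * (ur - b))) by (apply Rmult_le_compat_l; lra).
    assert (s0 * (phi ur * (ur - b)) <= s0 * (/ r * (ur - b)))
      by (apply Rmult_le_compat_l; [lra|]; apply Rmult_le_compat_r; lra).
    unfold Rdiv. nra. }
  assert (Hbound : (ur - b) * (1 - s0 / r) >= - (- b) * ((s0 - r) / r)).
  { replace (1 - s0 / r) with (- ((s0 - r) / r)) by (field; lra).
    assert (0 <= (s0 - r) / r) by (apply Rdiv_le_0_compat; lra). nra. }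
  assert (Hsmall : (- b) * ((s0 - r) / r) < kap).
  { assert (Hq : (s0 - r) / r <= kap / (- b + 1)).
    { apply Rmult_le_reg_r with r; [lra|]. unfold Rdiv. rewrite Rmult_assoc, Rinv_l, Rmult_1_r by lra.
      replace (kap * s0 / (2 * (- b + 1))) with (kap * / (- b + 1) * (s0 / 2)) in Hdel2 by (field; lra).
      apply Rle_trans with (kap * / (- b + 1) * (s0 / 2)); [lra|].
      apply Rmult_le_compat_l; [apply Rmult_le_pos; [lra|left; apply Rinv_0_lt_compat; lra]|lra]. }
    assert ((- b) * ((s0 - r) / r) <= (- b) * (kap / (- b + 1))) by (apply Rmult_le_compat_l; lra).
    assert ((- b) * (kap / (- b + 1)) < kap).
    { apply Rmult_lt_reg_r with (- b + 1); [lra|].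
      replace (- b * (kap / (- b + 1)) * (- b + 1)) with (- b * kap) by (field; lra). nra. }
    lra. }
  unfold kap in *. lra.
Qed.

Lemma uprof_post_gel t b : 0 < t -> t * phi b = 1 -> b <= 0 -> uprof t = b.
Proof.
  intros Ht Hb Hb0.
  assert (Hub : uprof t <= b).
  { destruct (Rle_or_lt (uprof t) b) as [|H]; auto. pose proof (Hphi_lt _ _ H).
    pose proof (Hphi_le1 t ltac:(lra)). fold (uprof t) in *. nra. }
  destruct Hub as [Hlt|]; auto. exfalso.
  set (a := uprof t) in *.
  assert (Hphib : forall s, 0 <= s -> s <= t -> s * phi b <= 1).
  { intros s Hs Hst. rewrite <- Hb. apply Rmult_le_compat_r; [pose proof (Hphi_pos b)|]; lra. }
  assert (Hbelow : forall r, 0 <= r -> r <= t -> uprof r <= b -> uprof r = a).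
  { intros r Hr Hrt Hrb. destruct (uprof_nonincr r t Hr Hrt) as [H|H]; [exfalso|auto].
    pose proof (hfun_uprof_le r t Hr Hrt) as Hh. fold a in Hh.
    assert (Hr1 : t * phi (uprof r) <= 1) by (rewrite <- Hb; apply Rmult_le_compat_l; [lra|now apply phi_le]).
    pose proof (hfun_lt t a (uprof r) ltac:(lra) H Hr1). lra. }
  destruct Hb0 as [Hb0|Hb0].
  2:{ pose proof (Hbelow 0 (Rle_refl 0) ltac:(lra) ltac:(rewrite uprof_0; lra)) as H.
      rewrite uprof_0 in H. lra. }
  set (S := fun r => 0 <= r <= t /\ b < uprof r).
  assert (HS0 : S 0) by (split; [lra|rewrite uprof_0; lra]).
  assert (HSb : bound S) by (exists t; intros r [Hr _]; lra).
  destruct (completeness S HSb (ex_intro _ 0 HS0)) as [s0 [Hup Hlub]].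
  assert (Hs00 : 0 <= s0) by (apply Hup; auto).
  assert (Hs0t : s0 <= t) by (apply Hlub; intros r [Hr _]; lra).
  assert (Hafter : forall r, s0 < r -> r <= t -> uprof r = a).
  { intros r Hr Hrt. apply Hbelow; try lra. destruct (Rle_or_lt (uprof r) b) as [|H]; auto.
    assert (r <= s0) by (apply Hup; split; [lra|auto]). lra. }
  destruct (Rlt_or_le b (uprof s0)) as [Hin|Hout].
  - destruct Hs0t as [Hs0t| ->]; [|unfold a in *; lra].
    apply (uprof_no_right_jump s0 t a); [lra|lra|]. intros r [Hr1 Hr2]. now apply Hafter.
  - assert (Hus0 : uprof s0 = a) by (apply Hbelow; auto).
    assert (Hs0pos : 0 < s0) by (destruct Hs00 as [|<-]; auto; rewrite uprof_0 in Hus0; lra).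
    apply (uprof_no_left_jump s0 a b Hs0pos Hlt Hb0 (Hphib s0 ltac:(lra) Hs0t) Hus0).
    intros del Hdel. apply NNPP. intros Hno.
    assert (s0 <= s0 - del); [|lra]. apply Hlub. intros r [Hr Hbr].
    destruct (Rle_or_lt r (s0 - del)) as [|Hrd]; auto. exfalso. apply Hno. exists r.
    split; [|auto]. split; auto. destruct (Req_dec r s0) as [->|]; [lra|].
    assert (r <= s0) by (apply Hup; split; auto). lra.
Qed.

End Profile.

Section CriticalSolution.
Variable v : R -> nat -> R.
Hypothesis Hsol : critical_solution v.

Definition mass t := m0 (v t).

Lemma v_nonneg t k : 0 <= t -> (1 <= k)%nat -> 0 <= v t k.
Proof. intros Ht Hk. now apply (proj1 Hsol t Ht). Qed.

Lemma fsum_le_mass t N : 0 <= t -> fsum (v t) N <= mass t.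
Proof.
  intros Ht. destruct (proj1 Hsol t Ht) as [Hp Hex].
  apply fsum_le_Series; auto.
Qed.

Lemma mass_nonincr s t : 0 <= s -> s <= t -> mass t <= mass s.
Proof. intros Hs Hst. destruct Hsol as [_ [_ [H _]]]. specialize (H s t Hs Hst). unfold mass. lra. Qed.

Lemma mass_bounds t : 0 <= t -> 0 < mass t <= mass 0.
Proof. intros Ht. destruct Hsol as [_ [_ [_ H]]]. specialize (H t Ht). unfold mass. lra. Qed.

Lemma mass0_pos : 0 < mass 0.
Proof. pose proof (mass_bounds 0 (Rle_refl 0)). lra. Qed.

Lemma v_bounds t k : 0 <= t -> (1 <= k)%nat -> 0 <= v t k <= mass 0.
Proof.
  intros Ht Hk. split; [now apply v_nonneg|].
  apply Rle_trans with (fsum (v t) k).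
  - apply (fsum_term_le (v t)); [lia|]. intros; apply v_nonneg; auto; lia.
  - eapply Rle_trans; [now apply fsum_le_mass|]. now apply mass_bounds.
Qed.

Lemma is_RInt_crit_rhs k s t : (1 <= k)%nat -> 0 <= s -> s <= t ->
  is_RInt (fun x => crit_rhs (v x) k) s t (v t k - v s k).
Proof.
  intros Hk Hs Hst. destruct Hsol as [_ [Heq _]].
  pose proof (Heq k t Hk ltac:(lra)) as Ht. pose proof (Heq k s Hk Hs) as Hs'.
  apply is_RInt_swap in Hs'.
  pose proof (is_RInt_Chasles _ s 0 t _ _ Hs' Ht) as H.
  replace (v t k - v s k) with (plus (opp (v s k - v 0 k)) (v t k - v 0 k)); auto.
  unfold plus, opp; simpl. ring.
Qed.

Lemma conv_bounds t k : 0 <= t -> 0 <= conv (v t) k <= INR k * (mass 0 * mass 0).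
Proof.
  intros Ht. rewrite conv_fsum. split.
  - apply fsum_nonneg. intros l Hl. apply Rmult_le_pos; apply v_nonneg; auto; lia.
  - apply Rle_trans with (INR (k - 1) * (mass 0 * mass 0)).
    + apply fsum_le_const. intros l Hl.
      pose proof (v_bounds t l Ht ltac:(lia)). pose proof (v_bounds t (k - l) Ht ltac:(lia)).
      apply Rmult_le_compat; tauto.
    + apply Rmult_le_compat_r; [pose proof mass0_pos; nra|]. apply le_INR; lia.
Qed.

Definition rhs_bound k := (INR k * INR k + INR k) * (mass 0 * mass 0).

Lemma rhs_bound_nonneg k : 0 <= rhs_bound k.
Proof. unfold rhs_bound. pose proof (pos_INR k). pose proof mass0_pos. apply Rmult_le_pos; nra. Qed.

Lemma rhs_bound_le l k : (l <= k)%nat -> rhs_bound l <= rhs_bound k.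
Proof.
  intros H. unfold rhs_bound. apply le_INR in H. pose proof (pos_INR l). pose proof mass0_pos.
  apply Rmult_le_compat_r; [nra|]. assert (INR l * INR l <= INR k * INR k) by (apply Rmult_le_compat; lra).
  lra.
Qed.

Lemma abs_crit_rhs_le t k : 0 <= t -> Rabs (crit_rhs (v t) k) <= rhs_bound k.
Proof.
  intros Ht. unfold crit_rhs, rhs_bound. fold (mass t).
  pose proof (conv_bounds t k Ht). pose proof (pos_INR k). pose proof (mass_bounds t Ht). pose proof mass0_pos.
  destruct k as [|k].
  - simpl. unfold Rdiv. rewrite !Rmult_0_l, Rminus_0_r, Rabs_R0. lra.
  - pose proof (v_bounds t (S k) Ht ltac:(lia)).
    assert (0 <= INR (S k) / 2 * conv (v t) (S k) <= INR (S k) * INR (S k) * (mass 0 * mass 0)) by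
      (split; [apply Rmult_le_pos; lra|unfold Rdiv; nra]).
    assert (0 <= INR (S k) * v t (S k) * mass t <= INR (S k) * (mass 0 * mass 0)) by
      (split; [apply Rmult_le_pos; [apply Rmult_le_pos|]; lra|rewrite Rmult_assoc; apply Rmult_le_compat_l; nra]).
    apply Rabs_le. nra.
Qed.

Lemma v_lipschitz k s t : (1 <= k)%nat -> 0 <= s -> 0 <= t ->
  Rabs (v t k - v s k) <= rhs_bound k * Rabs (t - s).
Proof.
  intros Hk. revert s t.
  assert (Hle : forall s t, 0 <= s -> s <= t -> Rabs (v t k - v s k) <= rhs_bound k * (t - s)).
  { intros s t Hs Hst. pose proof (is_RInt_dist_const _ s t _ 0 (rhs_bound k) Hst (is_RInt_crit_rhs k s t Hk Hs Hst)) as Hb.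
    rewrite Rmult_0_r, Rminus_0_r in Hb. apply Hb. intros z Hz. rewrite Rminus_0_r. apply abs_crit_rhs_le. lra. }
  intros s t Hs Ht. destruct (Rle_or_lt s t).
  - rewrite (Rabs_pos_eq (t - s)) by lra. auto.
  - rewrite <- Rabs_Ropp, (Rabs_left (t - s)), !Ropp_minus_distr by lra. apply Hle; lra.
Qed.

Lemma conv_lipschitz k s y : 0 <= s -> 0 <= y ->
  Rabs (conv (v y) k - conv (v s) k) <= INR k * (2 * mass 0 * rhs_bound k) * Rabs (y - s).
Proof.
  intros Hs Hy. rewrite !conv_fsum, <- fsum_minus.
  pose proof (Rabs_pos (y - s)). pose proof (rhs_bound_nonneg k). pose proof mass0_pos.
  eapply Rle_trans; [apply Rabs_fsum_le|].
  apply Rle_trans with (INR (k - 1) * (2 * mass 0 * rhs_bound k * Rabs (y - s))).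
  - apply fsum_le_const. intros l Hl.
    pose proof (v_bounds y l Hy ltac:(lia)). pose proof (v_bounds s (k - l) Hs ltac:(lia)).
    assert (Rabs (v y (k - l)%nat - v s (k - l)%nat) <= rhs_bound k * Rabs (y - s)).
    { eapply Rle_trans; [apply v_lipschitz; auto; lia|].
      apply Rmult_le_compat_r; auto. apply rhs_bound_le. lia. }
    assert (Rabs (v y l - v s l) <= rhs_bound k * Rabs (y - s)).
    { eapply Rle_trans; [apply v_lipschitz; auto; lia|].
      apply Rmult_le_compat_r; auto. apply rhs_bound_le. lia. }
    replace (v y l * v y (k - l)%nat - v s l * v s (k - l)%nat) with
      (v y l * (v y (k - l)%nat - v s (k - l)%nat) + v s (k - l)%nat * (v y l - v s l)) by ring.
    eapply Rle_trans; [apply Rabs_triang|]. rewrite !Rabs_mult.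
    rewrite (Rabs_pos_eq (v y l)), (Rabs_pos_eq (v s (k - l)%nat)) by tauto.
    assert (v y l * Rabs (v y (k - l)%nat - v s (k - l)%nat) <= mass 0 * (rhs_bound k * Rabs (y - s)))
      by (apply Rmult_le_compat; try tauto; apply Rabs_pos).
    assert (v s (k - l)%nat * Rabs (v y l - v s l) <= mass 0 * (rhs_bound k * Rabs (y - s)))
      by (apply Rmult_le_compat; try tauto; apply Rabs_pos).
    lra.
  - rewrite <- Rmult_assoc. apply Rmult_le_compat_r; [lra|].
    apply Rmult_le_compat_r; [nra|]. apply le_INR; lia.
Qed.

Lemma mass_right_cont t : 0 <= t -> forall eps, 0 < eps -> exists delta, 0 < delta /\
  forall y, t <= y < t + delta -> Rabs (mass y - mass t) <= eps.
Proof.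
  intros Ht eps Heps.
  destruct (proj1 Hsol t Ht) as [Hp Hex].
  destruct (fsum_cvg_Series (v t) Hex (eps / 2) ltac:(lra)) as [N HN].
  specialize (HN N (le_n _)). apply Rabs_def2 in HN.
  set (L := fsum rhs_bound N + 1).
  assert (HL : 0 < L) by (unfold L; pose proof (fsum_nonneg rhs_bound N (fun k _ => rhs_bound_nonneg k)); lra).
  exists (eps / (2 * L)). split; [apply Rdiv_lt_0_compat; lra|]. intros y Hy.
  (* the partial sums are Lipschitz, and mass is nonincreasing *)
  assert (Hl : Rabs (fsum (v y) N - fsum (v t) N) <= fsum rhs_bound N * (y - t)).
  { rewrite <- fsum_minus, fsum_scal_r. eapply Rle_trans; [apply Rabs_fsum_le|].
    apply fsum_le. intros k Hk. rewrite <- (Rabs_pos_eq (y - t)) by lra. apply v_lipschitz; [lia|lra|lra]. }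
  assert (fsum rhs_bound N * (y - t) <= eps / 2).
  { apply Rle_trans with (L * (y - t)); [apply Rmult_le_compat_r; unfold L; lra|].
    apply Rle_trans with (L * (eps / (2 * L))); [apply Rmult_le_compat_l; lra|]. right; field; lra. }
  apply Rabs_le_between in Hl. pose proof (fsum_le_mass y N ltac:(lra)). pose proof (mass_nonincr t y Ht ltac:(lra)).
  unfold mass, m0 in *. apply Rabs_le. lra.
Qed.

Lemma crit_rhs_dist_le k t y : 0 <= t -> t <= y ->
  Rabs (crit_rhs (v y) k - crit_rhs (v t) k) <=
    INR k * mass 0 * rhs_bound k * (INR k + 1) * (y - t) + INR k * mass 0 * Rabs (mass y - mass t).
Proof.
  intros Ht Hty. destruct k as [|k].
  - unfold crit_rhs. simpl. unfold Rdiv. rewrite !Rmult_0_l, !Rminus_0_r, Rabs_R0. lra.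
  - set (n := S k). pose proof (pos_INR n). pose proof mass0_pos. pose proof (rhs_bound_nonneg n).
    pose proof (conv_lipschitz n t y Ht ltac:(lra)) as Hc.
    pose proof (v_lipschitz n t y ltac:(unfold n; lia) Ht ltac:(lra)) as Hv.
    rewrite (Rabs_pos_eq (y - t)) in Hc, Hv by lra.
    pose proof (v_bounds y n ltac:(lra) ltac:(unfold n; lia)) as Hvy.
    pose proof (mass_bounds t Ht) as HMt.
    unfold crit_rhs. fold (mass y) (mass t).
    replace (INR n / 2 * conv (v y) n - INR n * v y n * mass y - (INR n / 2 * conv (v t) n - INR n * v t n * mass t))
      with (INR n / 2 * (conv (v y) n - conv (v t) n) - INR n * v y n * (mass y - mass t)
            - INR n * mass t * (v y n - v t n)) by ring.
    eapply Rle_trans; [apply Rabs_triang|]. eapply Rle_trans; [apply Rplus_le_compat_r, Rabs_triang|].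
    rewrite !Rabs_Ropp, !Rabs_mult, (Rabs_pos_eq (INR n / 2)), (Rabs_pos_eq (INR n)), (Rabs_pos_eq (v y n)),
      (Rabs_pos_eq (mass t)) by lra.
    assert (INR n / 2 * Rabs (conv (v y) n - conv (v t) n) <= INR n / 2 * (INR n * (2 * mass 0 * rhs_bound n) * (y - t)))
      by (apply Rmult_le_compat_l; lra).
    assert (INR n * v y n * Rabs (mass y - mass t) <= INR n * mass 0 * Rabs (mass y - mass t))
      by (apply Rmult_le_compat_r; [apply Rabs_pos|]; apply Rmult_le_compat_l; lra).
    assert (INR n * mass t * Rabs (v y n - v t n) <= INR n * mass 0 * (rhs_bound n * (y - t)))
      by (apply Rmult_le_compat; try nra; apply Rabs_pos).
    nra.
Qed.

Lemma crit_rhs_right_cont k t : 0 <= t -> forall eps, 0 < eps -> exists delta, 0 < delta /\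
  forall y, t <= y < t + delta -> Rabs (crit_rhs (v y) k - crit_rhs (v t) k) <= eps.
Proof.
  intros Ht eps Heps.
  set (L := INR k * mass 0 * rhs_bound k * (INR k + 1)). set (C := INR k * mass 0).
  assert (HC : 0 <= C) by (unfold C; pose proof (pos_INR k); pose proof mass0_pos; nra).
  assert (HL : 0 <= L) by (unfold L; fold C; pose proof (pos_INR k); pose proof (rhs_bound_nonneg k);
    apply Rmult_le_pos; [apply Rmult_le_pos|]; lra).
  destruct (mass_right_cont t Ht (eps / (2 * (C + 1)))) as [d1 [Hd1 H1]]; [apply Rdiv_lt_0_compat; lra|].
  exists (Rmin d1 (eps / (2 * (L + 1)))). split; [apply Rmin_pos; [|apply Rdiv_lt_0_compat]; lra|].
  intros y Hy.
  pose proof (Rmin_l d1 (eps / (2 * (L + 1)))). pose proof (Rmin_r d1 (eps / (2 * (L + 1)))).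
  eapply Rle_trans; [apply crit_rhs_dist_le; lra|]. fold L C.
  assert (L * (y - t) <= eps / 2).
  { apply Rle_trans with ((L + 1) * (eps / (2 * (L + 1)))); [apply Rmult_le_compat; lra|right; field; lra]. }
  assert (C * Rabs (mass y - mass t) <= eps / 2).
  { apply Rle_trans with ((C + 1) * (eps / (2 * (C + 1)))); [|right; field; lra].
    apply Rmult_le_compat; [lra|apply Rabs_pos|lra|apply H1; lra]. }
  lra.
Qed.

Lemma right_deriv_v k t : (1 <= k)%nat -> 0 <= t -> right_deriv (fun s => v s k) t (crit_rhs (v t) k).
Proof.
  intros Hk Ht eps Heps. destruct (crit_rhs_right_cont k t Ht eps Heps) as [d [Hd H]].
  exists d. split; auto. intros r Hr.
  pose proof (is_RInt_dist_const _ t (t + r) _ (crit_rhs (v t) k) eps ltac:(lra)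
    (is_RInt_crit_rhs k t (t + r) Hk Ht ltac:(lra))) as Hb.
  replace (t + r - t) with r in Hb by ring. apply Hb. intros z Hz. apply H. lra.
Qed.

Definition mass_int t := RInt mass 0 t.

Lemma ex_RInt_mass s t : 0 <= s -> s <= t -> ex_RInt mass s t.
Proof. intros Hs Hst. apply ex_RInt_monotone; auto. intros x y Hx Hxy Hy. apply mass_nonincr; lra. Qed.

Lemma mass_int_diff s t : 0 <= s -> s <= t -> mass_int t - mass_int s = RInt mass s t.
Proof.
  intros Hs Hst. unfold mass_int. rewrite <- (RInt_Chasles mass 0 s t) by (apply ex_RInt_mass; lra).
  change (plus (RInt mass 0 s) (RInt mass s t)) with (RInt mass 0 s + RInt mass s t). ring.
Qed.

Lemma mass_int_0 : mass_int 0 = 0.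
Proof. unfold mass_int. now rewrite RInt_point. Qed.

Lemma mass_int_bounds s t : 0 <= s -> s <= t ->
  (t - s) * mass t <= mass_int t - mass_int s <= (t - s) * mass s.
Proof.
  intros Hs Hst. rewrite mass_int_diff by auto.
  split; [replace ((t - s) * mass t) with (RInt (fun _ => mass t) s t) by now rewrite RInt_const
         |replace ((t - s) * mass s) with (RInt (fun _ => mass s) s t) by now rewrite RInt_const];
    apply RInt_le; auto; try apply ex_RInt_const; try (apply ex_RInt_mass; auto);
    intros x Hx; apply mass_nonincr; lra.
Qed.

Lemma right_deriv_mass_int t : 0 <= t -> right_deriv mass_int t (mass t).
Proof.
  intros Ht eps Heps. destruct (mass_right_cont t Ht eps Heps) as [d [Hd H]].
  exists d. split; auto. intros r Hr. rewrite mass_int_diff by lra.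
  pose proof (is_RInt_dist_const _ t (t + r) _ (mass t) eps ltac:(lra)
    (RInt_correct mass t (t + r) (ex_RInt_mass t (t + r) Ht ltac:(lra)))) as Hb.
  replace (t + r - t) with r in Hb by ring. apply Hb. intros z Hz. apply H. lra.
Qed.

Lemma mass_int_lipschitz s t : 0 <= s -> 0 <= t -> Rabs (mass_int t - mass_int s) <= mass 0 * Rabs (t - s).
Proof.
  intros Hs Ht. pose proof (mass_bounds s Hs). pose proof (mass_bounds t Ht).
  destruct (Rle_or_lt s t).
  - pose proof (mass_int_bounds s t Hs H1). rewrite !Rabs_pos_eq by nra. nra.
  - pose proof (mass_int_bounds t s Ht ltac:(lra)). rewrite <- Rabs_Ropp, (Rabs_left (t - s)) by lra.
    rewrite Rabs_pos_eq by nra. nra.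
Qed.

(** * Rescaled concentrations *)

(* b_k = e^{k A} v_k; clamping the time at 0 extends it to all of R, so that
   two-sided derivatives and integrals can be used for t > 0 *)
Definition resc k y := exp (INR k * mass_int (Rmax 0 y)) * v (Rmax 0 y) k.
Definition resc_rhs k y := INR k / 2 * conv (fun l => resc l y) k.

Lemma Rmax0_lipschitz x y : Rabs (Rmax 0 y - Rmax 0 x) <= Rabs (y - x).
Proof. unfold Rmax. repeat destruct Rle_dec; apply Rabs_le; unfold Rabs; destruct Rcase_abs; lra. Qed.

Lemma continuous_clamped (f : R -> R) L x : 0 <= L ->
  (forall s t, 0 <= s -> 0 <= t -> Rabs (f t - f s) <= L * Rabs (t - s)) ->
  continuous (fun y => f (Rmax 0 y)) x.
Proof.
  intros HL Hf. apply continuous_of_lipschitz with L; auto.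
  intros y. eapply Rle_trans; [apply Hf; apply Rmax_l|]. apply Rmult_le_compat_l; auto. apply Rmax0_lipschitz.
Qed.

Lemma continuous_resc k x : (1 <= k)%nat -> continuous (resc k) x.
Proof.
  intros Hk. unfold resc.
  apply (continuous_mult (fun y => exp (INR k * mass_int (Rmax 0 y))) (fun y => v (Rmax 0 y) k)).
  - apply continuous_exp_comp, (continuous_scal_r (INR k) (fun y => mass_int (Rmax 0 y))).
    exact (continuous_clamped mass_int (mass 0) x (Rlt_le _ _ mass0_pos) mass_int_lipschitz).
  - exact (continuous_clamped (fun s => v s k) (rhs_bound k) x (rhs_bound_nonneg k)
      (fun s t Hs Ht => v_lipschitz k s t Hk Hs Ht)).
Qed.

Lemma continuous_resc_rhs k x : continuous (resc_rhs k) x.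
Proof.
  unfold resc_rhs. apply (continuous_scal_r (INR k / 2) (fun y => conv (fun l => resc l y) k)).
  eapply continuous_ext; [intros y; symmetry; apply conv_fsum|].
  apply (continuous_fsum (fun l y => resc l y * resc (k - l)%nat y)). intros l Hl.
  apply (continuous_mult (resc l) (resc (k - l)%nat)); apply continuous_resc; lia.
Qed.

Lemma resc_nonneg k y : (1 <= k)%nat -> 0 <= resc k y.
Proof.
  intros Hk. unfold resc. apply Rmult_le_pos; [apply Rlt_le, exp_pos|]. apply v_nonneg; auto. apply Rmax_l.
Qed.

Lemma resc_0 k : resc k 0 = v 0 k.
Proof. unfold resc. rewrite Rmax_left, mass_int_0, Rmult_0_r, exp_0 by lra. ring. Qed.

Lemma resc_exp_mass_int k t : 0 <= t -> resc k t * exp (- (INR k * mass_int t)) = v t k.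
Proof.
  intros Ht. unfold resc. rewrite Rmax_right by auto.
  rewrite (Rmult_comm (exp _)), Rmult_assoc, <- exp_plus, Rplus_opp_r, exp_0. ring.
Qed.

Lemma conv_resc k t : 0 <= t -> conv (fun l => resc l t) k = exp (INR k * mass_int t) * conv (v t) k.
Proof.
  intros Ht. rewrite !conv_fsum, <- fsum_scal. apply fsum_ext. intros l Hl.
  unfold resc. rewrite Rmax_right by auto.
  replace (exp (INR k * mass_int t)) with (exp (INR l * mass_int t) * exp (INR (k - l) * mass_int t)); [ring|].
  rewrite <- exp_plus, minus_INR by lia. f_equal. ring.
Qed.

(* the loss term -k v_k m0 is exactly compensated by the factor e^{k A} *)
Lemma right_deriv_resc k t : (1 <= k)%nat -> 0 <= t -> right_deriv (resc k) t (resc_rhs k t).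
Proof.
  intros Hk Ht.
  pose proof (right_deriv_mult _ _ t _ _
    (right_deriv_comp exp _ t _ _ (right_deriv_scal (INR k) _ t _ (right_deriv_mass_int t Ht))
       (is_derive_exp _))
    (right_deriv_v k t Hk Ht)) as H.
  eapply right_deriv_ext; [| |exact H].
  - intros r Hr. unfold resc. now rewrite Rmax_right by lra.
  - unfold resc_rhs. rewrite conv_resc by auto. unfold crit_rhs. fold (mass t). ring.
Qed.

Lemma resc_eq_RInt k t : (1 <= k)%nat -> 0 <= t -> resc k t = resc k 0 + RInt (resc_rhs k) 0 t.
Proof.
  intros Hk Ht.
  assert (Hd : forall x, is_derive (RInt (resc_rhs k) 0) x (resc_rhs k x))
    by (intros; apply is_derive_RInt_continuous, continuous_resc_rhs).
  set (h := fun s => resc k s - RInt (resc_rhs k) 0 s).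
  assert (h t = h 0).
  { apply right_deriv_zero_eq; auto.
    - intros x Hx. apply left_cont_from_continuous. unfold h.
      apply (continuous_minus (resc k) (RInt (resc_rhs k) 0)); [now apply continuous_resc|].
      apply (@ex_derive_continuous R_AbsRing R_NormedModule). eexists. apply Hd.
    - intros x Hx.
      pose proof (right_deriv_plus _ _ x _ _ (right_deriv_resc k x Hk ltac:(lra))
        (right_deriv_of_is_derive _ x _ (is_derive_opp (RInt (resc_rhs k) 0) x _ (Hd x)))) as H.
      eapply right_deriv_ext; [| |exact H]; [reflexivity|]. apply Rplus_opp_r. }
  unfold h in H. rewrite RInt_point in H. change zero with 0 in H. lra.
Qed.

Lemma is_derive_resc k s : (1 <= k)%nat -> 0 < s -> is_derive (resc k) s (resc_rhs k s).
Proof.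
  intros Hk Hs.
  apply is_derive_ext_loc with (fun y => resc k 0 + RInt (resc_rhs k) 0 y).
  - exists (mkposreal s Hs). intros y Hy. cbn in Hy. unfold AbsRing_ball, abs, minus, plus, opp in Hy; simpl in Hy.
    apply Rabs_def2 in Hy. symmetry. apply resc_eq_RInt; auto; lra.
  - rewrite <- (Rplus_0_l (resc_rhs k s)).
    apply (is_derive_plus (fun _ => resc k 0) (RInt (resc_rhs k) 0)).
    + apply (is_derive_const (resc k 0)).
    + apply is_derive_RInt_continuous, continuous_resc_rhs.
Qed.

(** * Characteristics *)

Variable K : nat.
Hypothesis HK : forall k, (K < k)%nat -> v 0 k = 0.

Local Notation G := (mgf (fun k => v 0 k) K).

Definition charx w s := - w + s * G w.
Definition chare k w s := exp (- (INR k * charx w s)).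
Definition charY N w s := fsum (fun k => resc k s * chare k w s) N.
Definition charD N w s := fsum (fun k => INR k * (resc k s * chare k w s)) N.
Definition charR N w s := charY N w s * charD N w s - coag_gain (fun k => resc k s * chare k w s) N.
Definition charE N w s := exp (- RInt (charD N w) 0 s).

Lemma chare_split k l w s : (l <= k)%nat -> chare k w s = chare l w s * chare (k - l) w s.
Proof. intros H. unfold chare. rewrite <- exp_plus, minus_INR by auto. f_equal. ring. Qed.

Lemma is_derive_chare k w s : is_derive (chare k w) s (chare k w s * (- (INR k * G w))).
Proof. unfold chare, charx. auto_derive; auto. ring. Qed.

Lemma continuous_charY N w s : continuous (charY N w) s.
Proof.
  apply (continuous_fsum (fun k s => resc k s * chare k w s)). intros k Hk.
  apply (continuous_mult (resc k) (chare k w)); [apply continuous_resc; lia|].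
  apply (@ex_derive_continuous R_AbsRing R_NormedModule). eexists; apply is_derive_chare.
Qed.

Lemma continuous_charD N w s : continuous (charD N w) s.
Proof.
  apply (continuous_fsum (fun k s => INR k * (resc k s * chare k w s))). intros k Hk.
  apply (continuous_scal_r (INR k) (fun s => resc k s * chare k w s)).
  apply (continuous_mult (resc k) (chare k w)); [apply continuous_resc; lia|].
  apply (@ex_derive_continuous R_AbsRing R_NormedModule). eexists; apply is_derive_chare.
Qed.

Lemma is_derive_charY N w s : 0 < s ->
  is_derive (charY N w) s (coag_gain (fun k => resc k s * chare k w s) N - G w * charD N w s).
Proof.
  intros Hs.
  replace (coag_gain (fun k => resc k s * chare k w s) N - G w * charD N w s) with
    (fsum (fun k => resc_rhs k s * chare k w s + resc k s * (chare k w s * (- (INR k * G w)))) N).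
  - apply (is_derive_fsum (fun k s => resc k s * chare k w s)
      (fun k s => resc_rhs k s * chare k w s + resc k s * (chare k w s * (- (INR k * G w))))).
    intros k Hk.
    apply (is_derive_mult (resc k) (chare k w)); [apply is_derive_resc; auto; lia|apply is_derive_chare|].
    intros; apply Rmult_comm.
  - rewrite fsum_plus. unfold coag_gain, charD. rewrite <- fsum_scal.
    replace (fsum (fun k => resc k s * (chare k w s * - (INR k * G w))) N)
      with (- fsum (fun k => G w * (INR k * (resc k s * chare k w s))) N)
      by (rewrite <- (Rmult_1_l (fsum _ N)), Ropp_mult_distr_l, <- fsum_scal; apply fsum_ext; intros; ring).
    unfold Rminus. f_equal. apply fsum_ext. intros k Hk.
    unfold resc_rhs. rewrite conv_fsum, Rmult_assoc, fsum_scal_r. f_equal.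
    apply fsum_ext. intros l Hl. rewrite (chare_split k l) by lia. ring.
Qed.

Lemma is_derive_charE N w x : is_derive (charE N w) x (- charD N w x * charE N w x).
Proof.
  apply (is_derive_comp exp (fun s => - RInt (charD N w) 0 s)); [apply is_derive_exp|].
  apply (is_derive_opp (RInt (charD N w) 0)), is_derive_RInt_continuous, continuous_charD.
Qed.

Lemma charE_0 N w : charE N w 0 = 1.
Proof. unfold charE. rewrite RInt_point. change zero with 0. now rewrite Ropp_0, exp_0. Qed.

Lemma charY_nonneg_terms k w s : (1 <= k)%nat -> 0 <= resc k s * chare k w s.
Proof. intros Hk. apply Rmult_le_pos; [now apply resc_nonneg|apply Rlt_le, exp_pos]. Qed.

Lemma charD_nonneg N w s : 0 <= charD N w s.
Proof.
  apply fsum_nonneg. intros k Hk. apply Rmult_le_pos; [apply pos_INR|]. apply charY_nonneg_terms. lia.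
Qed.

Lemma charR_nonneg N w s : 0 <= charR N w s.
Proof.
  unfold charR, charY, charD.
  pose proof (coag_gain_le (fun k => resc k s * chare k w s) (fun k Hk => charY_nonneg_terms k w s Hk) N). lra.
Qed.

Lemma charY_0 N w : charY N w 0 = fsum (fun k => v 0 k * exp (INR k * w)) N.
Proof. apply fsum_ext. intros k Hk. rewrite resc_0. unfold chare, charx. do 2 f_equal. ring. Qed.

Lemma charY_0_le N w : charY N w 0 <= G w.
Proof.
  rewrite charY_0. unfold mgf. destruct (Nat.le_gt_cases N K).
  - apply fsum_le_fsum_longer; auto. intros k Hk.
    apply Rmult_le_pos; [apply v_nonneg; auto; lra|apply Rlt_le, exp_pos].
  - right. apply fsum_stable; [intros k Hk; rewrite HK by lia; ring|lia].
Qed.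

Lemma charY_0_eq N w : (K <= N)%nat -> charY N w 0 = G w.
Proof. intros HN. rewrite charY_0. apply fsum_stable; auto. intros k Hk. rewrite HK by lia. ring. Qed.

Lemma RInt_charD_bounds N w s Db : 0 <= s -> (forall c, 0 <= c <= s -> charD N w c <= Db) ->
  0 <= RInt (charD N w) 0 s <= s * Db.
Proof.
  intros Hs HD. assert (Hex : ex_RInt (charD N w) 0 s)
    by (apply (@ex_RInt_continuous R_CompleteNormedModule); intros; apply continuous_charD).
  split.
  - apply RInt_ge_0; auto. intros; apply charD_nonneg.
  - replace (s * Db) with (RInt (fun _ => Db) 0 s)
      by (rewrite RInt_const; cbn; unfold mult; cbn; ring).
    apply RInt_le; auto; [apply ex_RInt_const|]. intros; apply HD; lra.
Qed.

(* d/ds [E (Y - G(w))] = - E R <= 0, where E = exp (- int D) *)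
Lemma charY_mvt N w s : 0 < s -> exists c, 0 <= c <= s /\
  charE N w s * (charY N w s - G w) - (charY N w 0 - G w) = - charE N w c * charR N w c * s.
Proof.
  intros Hs. set (f := fun s => charE N w s * (charY N w s - G w)).
  assert (Hf : forall c, 0 < c -> is_derive f c (- charE N w c * charR N w c)).
  { intros c Hc.
    assert (H2 : is_derive (fun s => charY N w s - G w) c
                   (coag_gain (fun k => resc k c * chare k w c) N - G w * charD N w c)).
    { rewrite <- (Rminus_0_r (coag_gain _ _ - _)).
      apply (is_derive_minus (charY N w) (fun _ => G w)); [now apply is_derive_charY|apply (is_derive_const (G w))]. }
    pose proof (is_derive_mult _ _ c _ _ (is_derive_charE N w c) H2 Rmult_comm) as H.
    replace (- charE N w c * charR N w c) with
      (plus (mult (- charD N w c * charE N w c) (charY N w c - G w))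
            (mult (charE N w c) (coag_gain (fun k => resc k c * chare k w c) N - G w * charD N w c)));
      [exact H|].
    unfold plus, mult, charR; simpl. ring. }
  destruct (MVT_gen f 0 s (fun c => - charE N w c * charR N w c)) as [c [Hc Heq]].
  - intros x Hx. rewrite Rmin_left in Hx by lra. apply Hf. lra.
  - intros x _. apply continuity_pt_filterlim.
    apply (continuous_mult (charE N w) (fun s => charY N w s - G w)).
    + apply (@ex_derive_continuous R_AbsRing R_NormedModule). eexists; apply is_derive_charE.
    + apply (continuous_minus (charY N w) (fun _ => G w)); [apply continuous_charY|apply continuous_const].
  - rewrite Rmin_left, Rmax_right in Hc by lra. exists c. split; auto.
    unfold f in Heq. rewrite charE_0, Rmult_1_l in Heq. rewrite Heq. ring.
Qed.

Lemma charY_le_mgf N w s : 0 <= s -> charY N w s <= G w.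
Proof.
  intros Hs. destruct (Req_dec s 0) as [->|Hs0]; [apply charY_0_le|].
  destruct (charY_mvt N w s ltac:(lra)) as [c [Hc Heq]].
  pose proof (charY_0_le N w). pose proof (exp_pos (- RInt (charD N w) 0 c)).
  pose proof (charR_nonneg N w c). pose proof (exp_pos (- RInt (charD N w) 0 s)).
  fold (charE N w c) (charE N w s) in *.
  assert (0 <= charE N w c * charR N w c * s) by (repeat apply Rmult_le_pos; lra).
  destruct (Rle_or_lt (charY N w s) (G w)); auto.
  assert (0 < charE N w s * (charY N w s - G w)) by (apply Rmult_lt_0_compat; lra). lra.
Qed.

Lemma charY_ge N w s Rb Db : 0 < s -> (K <= N)%nat ->
  (forall c, 0 <= c <= s -> charR N w c <= Rb) -> (forall c, 0 <= c <= s -> charD N w c <= Db) ->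
  G w - s * Rb * exp (s * Db) <= charY N w s.
Proof.
  intros Hs HN HR HD.
  destruct (charY_mvt N w s Hs) as [c [Hc Heq]]. rewrite charY_0_eq in Heq by auto.
  pose proof (charR_nonneg N w c). pose proof (HR c Hc).
  assert (HEc : 0 < charE N w c <= 1).
  { split; [apply exp_pos|]. apply exp_neg_le_1, (RInt_charD_bounds N w c Db); [lra|intros; apply HD; lra]. }
  assert (HEs : exp (- (s * Db)) <= charE N w s).
  { apply exp_le_exp. apply Ropp_le_contravar, (RInt_charD_bounds N w s Db); auto; lra. }
  assert (Hprod : charE N w s * (G w - charY N w s) <= Rb * s).
  { assert (charE N w c * charR N w c <= Rb) by (rewrite <- (Rmult_1_l Rb); apply Rmult_le_compat; lra). nra. }
  destruct (Rle_or_lt (G w) (charY N w s)) as [Hle|Hlt].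
  - assert (0 <= s * Rb * exp (s * Db)) by (apply Rmult_le_pos; [nra|apply Rlt_le, exp_pos]). lra.
  - assert (Hexp : exp (- (s * Db)) * exp (s * Db) = 1) by (rewrite <- exp_plus, Rplus_opp_l; apply exp_0).
    assert ((G w - charY N w s) * exp (- (s * Db)) * exp (s * Db) <= Rb * s * exp (s * Db))
      by (apply Rmult_le_compat_r; [apply Rlt_le, exp_pos|nra]).
    rewrite Rmult_assoc, Hexp, Rmult_1_r in H1. lra.
Qed.

Definition laplace_resc N s x := fsum (fun k => resc k s * exp (- (INR k * x))) N.

Lemma charY_laplace N w s : charY N w s = laplace_resc N s (charx w s).
Proof. reflexivity. Qed.

Lemma laplace_resc_mass_int N t : 0 <= t -> laplace_resc N t (mass_int t) = fsum (v t) N.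
Proof. intros Ht. apply fsum_ext. intros k Hk. now apply resc_exp_mass_int. Qed.

Lemma laplace_resc_nonincr N s x1 x2 : x1 <= x2 -> laplace_resc N s x2 <= laplace_resc N s x1.
Proof.
  intros H. apply fsum_le. intros k Hk. apply Rmult_le_compat_l; [apply resc_nonneg; lia|].
  apply exp_le_exp. pose proof (pos_INR k). nra.
Qed.

(* the k-th term decays like k e^{-k (x1 - x0)}, which is summable against e^{-k x0} *)
Lemma laplace_resc_lipschitz N s x0 x1 x2 : x0 < x1 -> x1 <= x2 ->
  laplace_resc N s x1 - laplace_resc N s x2 <= (x2 - x1) / (1 - exp (- ((x1 - x0) / 2))) * laplace_resc N s x0.
Proof.
  intros H01 H12. set (d := x1 - x0). set (q := exp (- (d / 2))).
  assert (Hq : q < 1) by (unfold q; rewrite <- exp_0; apply exp_increasing; unfold d; lra).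
  unfold laplace_resc. rewrite <- fsum_minus. unfold Rdiv. rewrite Rmult_assoc, <- fsum_scal, <- fsum_scal.
  apply fsum_le. intros k Hk.
  pose proof (resc_nonneg k s ltac:(lia)) as Hb. pose proof (pos_INR k).
  assert (H1 : exp (- (INR k * x1)) - exp (- (INR k * x2)) <= INR k * (x2 - x1) * exp (- (INR k * x1))).
  { replace (- (INR k * x2)) with (- (INR k * x1) + - (INR k * (x2 - x1))) by ring. rewrite exp_plus.
    pose proof (one_minus_exp_neg_le (INR k * (x2 - x1))). pose proof (exp_pos (- (INR k * x1))). nra. }
  assert (H2 : INR k * exp (- (INR k * x1)) <= / (1 - q) * exp (- (INR k * x0))).
  { replace (- (INR k * x1)) with (- (INR k * d) + - (INR k * x0)) by (unfold d; ring).
    rewrite exp_plus, <- Rmult_assoc. apply Rmult_le_compat_r; [apply Rlt_le, exp_pos|].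
    apply INR_mul_exp_le_inv. unfold d; lra. }
  replace (resc k s * exp (- (INR k * x1)) - resc k s * exp (- (INR k * x2)))
    with (resc k s * (exp (- (INR k * x1)) - exp (- (INR k * x2)))) by ring.
  replace ((x2 - x1) * (/ (1 - q) * (resc k s * exp (- (INR k * x0)))))
    with (resc k s * ((x2 - x1) * (/ (1 - q) * exp (- (INR k * x0))))) by ring.
  apply Rmult_le_compat_l; auto. apply Rle_trans with ((x2 - x1) * (INR k * exp (- (INR k * x1)))); [lra|].
  apply Rmult_le_compat_l; lra.
Qed.

Variable k0 : nat.
Hypothesis Hk0 : (1 <= k0 <= K)%nat.
Hypothesis Hak0 : 0 < v 0 k0.

Local Notation phi := (dmgf (fun k => v 0 k) K).

Lemma init_nonneg k : (1 <= k)%nat -> 0 <= v 0 k.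
Proof. intros Hk. apply v_nonneg; auto; lra. Qed.

Let G_pos := mgf_pos (fun k => v 0 k) K k0 init_nonneg Hk0 Hak0.
Let G_secant := mgf_secant (fun k => v 0 k) K k0 init_nonneg Hk0 Hak0.
Let phi_pos := dmgf_pos (fun k => v 0 k) K k0 init_nonneg Hk0 Hak0.
Let phi_le := dmgf_le (fun k => v 0 k) K k0 init_nonneg Hk0 Hak0.
Let phi_lt := dmgf_lt (fun k => v 0 k) K k0 init_nonneg Hk0 Hak0.
Let phi_level_ex := dmgf_level_ex (fun k => v 0 k) K k0 init_nonneg Hk0 Hak0.
Let phi_level_unique := dmgf_level_unique (fun k => v 0 k) K k0 init_nonneg Hk0 Hak0.

Section CharCvg.
Variables t w c : R.
Hypothesis Ht : 0 < t.
Hypothesis Hwc : w < c.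
Hypothesis Hc : t * phi c <= 1.

Let del := (c - w) - t * (G c - G w).

Lemma del_pos : 0 < del.
Proof.
  destruct (G_secant w c Hwc) as [_ H2].
  assert (t * (G c - G w) < t * (phi c * (c - w))) by (apply Rmult_lt_compat_l; lra).
  unfold del. nra.
Qed.

(* for s <= t the characteristic through w lies at distance >= del beyond the one through c *)
Lemma resc_chare_gap s k : 0 <= s <= t -> (1 <= k)%nat ->
  resc k s * chare k w s <= resc k s * chare k c s * exp (- (INR k * del)).
Proof.
  intros Hs Hk. rewrite Rmult_assoc. apply Rmult_le_compat_l; [now apply resc_nonneg|].
  unfold chare, charx. rewrite <- exp_plus. apply exp_le_exp.
  pose proof (G_secant w c Hwc). pose proof (phi_pos w).
  assert (0 <= (t - s) * (G c - G w)) by (apply Rmult_le_pos; nra).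
  pose proof (pos_INR k). unfold del. nra.
Qed.

Lemma charY_c_bounds N s : 0 <= s <= t ->
  0 <= fsum (fun k => resc k s * chare k c s) N <= G c.
Proof.
  intros Hs. split; [apply fsum_nonneg; intros; apply charY_nonneg_terms; lia|].
  apply charY_le_mgf. lra.
Qed.

Lemma charR_le N s : 0 <= s <= t -> charR N w s <= tail_factor del N * (G c * G c).
Proof.
  intros Hs. unfold charR, charY, charD.
  eapply Rle_trans.
  - apply (coag_gain_defect _ (fun k Hk => charY_nonneg_terms k w s Hk) (fun k => resc k s * chare k c s) del del_pos).
    intros k Hk. now apply resc_chare_gap.
  - pose proof (charY_c_bounds N s Hs).
    apply Rmult_le_compat_l; [apply tail_factor_nonneg, del_pos|]. apply Rmult_le_compat; lra.
Qed.

Lemma charD_le N s : 0 <= s <= t -> charD N w s <= G c / (1 - exp (- (del / 2))).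
Proof.
  intros Hs. pose proof del_pos.
  assert (exp (- (del / 2)) < 1) by (rewrite <- exp_0; apply exp_increasing; lra).
  apply Rle_trans with (fsum (fun k => resc k s * chare k c s) N / (1 - exp (- (del / 2)))).
  - unfold Rdiv. rewrite fsum_scal_r. apply fsum_le. intros k Hk.
    pose proof (resc_chare_gap s k Hs ltac:(lia)).
    pose proof (INR_mul_exp_le_inv k del ltac:(lra)).
    pose proof (charY_nonneg_terms k c s ltac:(lia)). pose proof (pos_INR k).
    apply Rle_trans with (INR k * (resc k s * chare k c s * exp (- (INR k * del)))); [now apply Rmult_le_compat_l|].
    replace (INR k * (resc k s * chare k c s * exp (- (INR k * del))))
      with ((resc k s * chare k c s) * (INR k * exp (- (INR k * del)))) by ring.
    now apply Rmult_le_compat_l.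
  - unfold Rdiv. apply Rmult_le_compat_r; [left; apply Rinv_0_lt_compat; lra|]. now apply charY_c_bounds.
Qed.

Lemma charY_cvg eps : 0 < eps -> exists N0, forall N, (N0 <= N)%nat -> G w - eps <= charY N w t.
Proof.
  intros Heps. pose proof del_pos. pose proof (G_pos c).
  set (q := exp (- (del / 2))).
  assert (Hq : q < 1) by (unfold q; rewrite <- exp_0; apply exp_increasing; lra).
  set (Db := G c / (1 - q)).
  set (C := t * (G c * G c) * exp (t * Db) / (1 - q)).
  assert (HC : 0 <= C).
  { unfold C; apply Rdiv_le_0_compat; [|lra].
    apply Rmult_le_pos; [apply Rmult_le_pos; [lra|nra]|apply Rlt_le, exp_pos]. }
  destruct (exp_neg_INR_small (del / 2) (eps / (C + 1))) as [N1 HN1]; [lra|apply Rdiv_lt_0_compat; lra|].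
  exists (Nat.max N1 K). intros N HN.
  pose proof (charY_ge N w t (tail_factor del N * (G c * G c)) Db Ht ltac:(lia)
    (fun s Hs => charR_le N s Hs) (fun s Hs => charD_le N s Hs)) as Hlow.
  assert (HeN : tail_factor del N <= eps / (C + 1) / (1 - q)).
  { unfold tail_factor. fold q. unfold Rdiv. apply Rmult_le_compat_r; [left; apply Rinv_0_lt_compat; lra|].
    replace (- (INR N * del * / 2)) with (- (INR N * (del / 2))) by (unfold Rdiv; ring). apply HN1. lia. }
  assert (HX : C * (1 - q) = t * (G c * G c) * exp (t * Db)) by (unfold C; field; lra).
  assert (Hb : t * (tail_factor del N * (G c * G c)) * exp (t * Db) <= eps / (C + 1) / (1 - q) * (C * (1 - q))).
  { rewrite HX. replace (t * (tail_factor del N * (G c * G c)) * exp (t * Db))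
      with (tail_factor del N * (t * (G c * G c) * exp (t * Db))) by ring.
    apply Rmult_le_compat_r; [rewrite <- HX; apply Rmult_le_pos; lra|auto]. }
  replace (eps / (C + 1) / (1 - q) * (C * (1 - q))) with (eps * (C / (C + 1))) in Hb by (field; lra).
  assert (eps * (C / (C + 1)) <= eps).
  { rewrite <- (Rmult_1_r eps) at 2. apply Rmult_le_compat_l; [lra|].
    apply Rmult_le_reg_r with (C + 1); [lra|]. unfold Rdiv. rewrite Rmult_assoc, Rinv_l by lra. lra. }
  lra.
Qed.

End CharCvg.

(** * The mass equation M(t) = G(t M(t) - A(t)) *)

Section MassEquation.
Variables t c : R.
Hypothesis Ht : 0 < t.
Hypothesis Hc : t * phi c = 1.

Lemma charx_lt w1 w2 : w1 < w2 -> w2 <= c -> charx w2 t < charx w1 t.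
Proof.
  intros H12 H2c. unfold charx. destruct (G_secant w1 w2 H12) as [_ Hh].
  assert (t * phi w2 <= 1) by (rewrite <- Hc; apply Rmult_le_compat_l; [lra|now apply phi_le]).
  assert (t * (G w2 - G w1) < t * (phi w2 * (w2 - w1))) by (apply Rmult_lt_compat_l; auto). nra.
Qed.

Lemma charx_le w1 w2 : w1 <= w2 -> w2 <= c -> charx w2 t <= charx w1 t.
Proof. intros [H| ->] H2c; [left; now apply charx_lt|lra]. Qed.

Lemma mass_le_mgf w : charx w t <= mass_int t -> mass t <= G w.
Proof.
  intros Hw. destruct (proj1 Hsol t ltac:(lra)) as [_ Hex].
  apply Series_le_of_fsum_le; auto. intros N.
  rewrite <- laplace_resc_mass_int by lra.
  eapply Rle_trans; [apply laplace_resc_nonincr, Hw|]. rewrite <- charY_laplace. apply charY_le_mgf. lra.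
Qed.

Lemma mgf_le_mass w : w < c -> mass_int t <= charx w t -> G w <= mass t.
Proof.
  intros Hwc Hw. apply le_epsilon. intros eps Heps.
  destruct (charY_cvg t w c Ht Hwc ltac:(lra) eps Heps) as [N HN]. specialize (HN N (le_n _)).
  pose proof (laplace_resc_nonincr N t _ _ Hw) as Hl. rewrite laplace_resc_mass_int in Hl by lra.
  pose proof (fsum_le_mass t N ltac:(lra)). rewrite charY_laplace in HN. lra.
Qed.

(* if A(t) < x(c), the Laplace transforms at x(w) < x(c) are controlled through their value at A(t) *)
Lemma mgf_c_le_of_gap w' : mass_int t < charx c t -> w' < c ->
  G c <= G w' + (charx w' t - charx c t) * (mass t / (1 - exp (- ((charx c t - mass_int t) / 2)))).
Proof.
  intros Hlt Hw'. pose proof (charx_le w' c ltac:(lra) ltac:(lra)) as Hx.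
  set (x0 := mass_int t) in *. set (x1 := charx c t) in *.
  set (q := exp (- ((x1 - x0) / 2))).
  assert (Hq : q < 1) by (unfold q; rewrite <- exp_0; apply exp_increasing; lra).
  apply le_of_continuous_left; [apply continuous_mgf|]. intros w'' Hw''.
  apply le_epsilon. intros eps Heps.
  destruct (charY_cvg t w'' c Ht Hw'' ltac:(lra) eps Heps) as [N HN]. specialize (HN N (le_n _)).
  rewrite charY_laplace in HN.
  assert (laplace_resc N t (charx w'' t) <= laplace_resc N t x1)
    by (apply laplace_resc_nonincr, charx_le; lra).
  pose proof (laplace_resc_lipschitz N t x0 x1 (charx w' t) Hlt ltac:(lra)) as Hl. fold q in Hl.
  assert (laplace_resc N t (charx w' t) <= G w') by (rewrite <- charY_laplace; apply charY_le_mgf; lra).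
  assert (laplace_resc N t x0 <= mass t)
    by (unfold x0; rewrite laplace_resc_mass_int by lra; apply fsum_le_mass; lra).
  assert ((charx w' t - x1) / (1 - q) * laplace_resc N t x0 <= (charx w' t - x1) * (mass t / (1 - q))).
  { replace ((charx w' t - x1) * (mass t / (1 - q))) with ((charx w' t - x1) / (1 - q) * mass t) by (field; lra).
    apply Rmult_le_compat_l; auto. apply Rdiv_le_0_compat; lra. }
  lra.
Qed.

(* otherwise G(c) - G(w) <= L (x(w) - x(c)) for all w < c, which contradicts phi(c) > 0 *)
Lemma charx_le_mass_int : charx c t <= mass_int t.
Proof.
  destruct (Rle_or_lt (charx c t) (mass_int t)) as [|Hlt]; auto. exfalso.
  pose proof (mgf_c_le_of_gap) as Hkey.
  set (x0 := mass_int t) in *. set (x1 := charx c t) in *.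
  set (q := exp (- ((x1 - x0) / 2))) in *.
  assert (Hq : q < 1) by (unfold q; rewrite <- exp_0; apply exp_increasing; lra).
  set (L := mass t / (1 - q)) in *.
  pose proof (mass_bounds t ltac:(lra)).
  assert (HL : 0 < L) by (unfold L; apply Rdiv_lt_0_compat; lra).
  assert (Hineq : forall w', w' < c -> phi w' - L * (t * (phi c - phi w')) <= 0).
  { intros w' Hw'. specialize (Hkey w' Hlt Hw').
    destruct (G_secant w' c Hw') as [Hg1 _].
    assert (Hx : charx w' t - x1 <= (c - w') * (1 - t * phi w')) by (unfold x1, charx; nra).
    assert (HxL : (charx w' t - x1) * L <= (c - w') * (1 - t * phi w') * L) by (apply Rmult_le_compat_r; lra).
    assert (Heq : 1 - t * phi w' = t * (phi c - phi w')) by (rewrite Rmult_minus_distr_l, Hc; ring).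
    rewrite Heq in HxL.
    apply Rmult_le_reg_r with (c - w'); [lra|].
    replace ((phi w' - L * (t * (phi c - phi w'))) * (c - w'))
      with (phi w' * (c - w') - (c - w') * (t * (phi c - phi w')) * L) by ring.
    lra. }
  assert (Hphic : phi c - L * (t * (phi c - phi c)) <= 0).
  { apply (le_of_continuous_left (fun w => phi w - L * (t * (phi c - phi w)))); auto.
    apply (continuous_minus phi (fun w => L * (t * (phi c - phi w)))); [apply continuous_dmgf|].
    apply (continuous_scal_r L (fun w => t * (phi c - phi w))), (continuous_scal_r t (fun w => phi c - phi w)).
    apply (continuous_minus (fun _ => phi c) phi); [apply continuous_const|apply continuous_dmgf]. }
  pose proof (phi_pos c). lra.
Qed.

Lemma mass_eq_mgf : mass t = G (t * mass t - mass_int t) /\ t * phi (t * mass t - mass_int t) <= 1.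
Proof.
  set (w0 := Rmin c (- mass_int t)).
  assert (Hw0c : w0 <= c) by apply Rmin_l.
  assert (Hw0 : mass_int t <= charx w0 t).
  { unfold charx. pose proof (G_pos w0). assert (w0 <= - mass_int t) by apply Rmin_r. nra. }
  destruct (IVT_gen (fun w => charx w t) w0 c (mass_int t)) as [w [Hw Hxw]].
  - intros x. apply continuity_pt_filterlim.
    apply (@continuous_plus R_UniformSpace R_AbsRing R_NormedModule (fun w => - w) (fun w => t * G w)).
    + apply (@continuous_opp R_UniformSpace R_AbsRing R_NormedModule (fun w => w)), continuous_id.
    + apply (continuous_scal_r t G), continuous_mgf.
  - pose proof (charx_le w0 c Hw0c (Rle_refl c)). pose proof charx_le_mass_int.
    rewrite Rmin_right, Rmax_left by lra. lra.
  - rewrite Rmin_left, Rmax_right in Hw by lra.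
    assert (HMG : mass t = G w).
    { apply Rle_antisym; [apply mass_le_mgf; lra|].
      destruct (proj2 Hw) as [Hwc| ->]; [apply mgf_le_mass; lra|].
      apply le_of_continuous_left; [apply continuous_mgf|]. intros y Hy.
      apply mgf_le_mass; auto. rewrite <- Hxw. apply charx_le; lra. }
    assert (Hu : t * mass t - mass_int t = w) by (rewrite HMG, <- Hxw; unfold charx; ring).
    rewrite Hu. split; auto. rewrite <- Hc. apply Rmult_le_compat_l; [lra|]. apply phi_le. lra.
Qed.

End MassEquation.

Lemma mass_profile s : 0 <= s ->
  mass s = G (s * mass s - mass_int s) /\ s * phi (s * mass s - mass_int s) <= 1.
Proof.
  intros [Hs| <-].
  - destruct (phi_level_ex s Hs) as [c Hc]. now apply (mass_eq_mgf s c).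
  - rewrite mass_int_0, !Rmult_0_l, Rminus_0_r. split; [|lra].
    unfold mass, m0. rewrite (Series_finite_support _ K HK). unfold mgf.
    apply fsum_ext. intros k _. rewrite Rmult_0_r, exp_0. ring.
Qed.

(** * Phi before and after gelation *)

Lemma m1_init : m1 (v 0) = phi 0.
Proof.
  unfold m1. rewrite (Series_finite_support (fun k => INR k * v 0 k) K) by (intros k Hk; rewrite HK by lia; ring).
  apply fsum_ext. intros k _. rewrite Rmult_0_r, exp_0. ring.
Qed.

Lemma RInt_Phi T : 0 <= T -> RInt (Phi v) 0 T = T * mass 0 - mass_int T.
Proof.
  intros HT. apply (@is_RInt_unique R_CompleteNormedModule).
  apply (is_RInt_ext (fun s => mass 0 - mass s)); [intros; reflexivity|].
  apply (@is_RInt_minus R_NormedModule); [|exact (RInt_correct mass 0 T (ex_RInt_mass 0 T (Rle_refl 0) HT))].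
  replace (T * mass 0) with (scal (T - 0) (mass 0)) by (cbn; unfold mult; cbn; ring).
  exact (@is_RInt_const R_NormedModule 0 T (mass 0)).
Qed.

Lemma winv_level T c : T * phi c = 1 -> winv (v 0) T = - c.
Proof.
  intros Hc.
  assert (Hw : forall x, wfun (v 0) x = / phi (- x)).
  { intros x. unfold wfun. f_equal. rewrite (Series_finite_support (fun k => INR k * v 0 k * exp (- INR k * x)) K)
      by (intros k Hk; rewrite HK by lia; ring).
    apply fsum_ext. intros k _. do 2 f_equal. ring. }
  unfold winv. set (P := fun x => wfun (v 0) x = T).
  assert (HP : P (epsilon (inhabits 0) P)).
  { apply epsilon_spec. exists (- c). unfold P. rewrite Hw, Ropp_involutive.
    pose proof (phi_pos c). apply Rmult_eq_reg_l with (phi c); [|lra]. rewrite Rinv_r; lra. }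
  unfold P in HP. rewrite Hw in HP. set (x := epsilon (inhabits 0) P) in *.
  assert (T * phi (- x) = 1) by (rewrite <- HP, Rinv_l; auto; pose proof (phi_pos (- x)); lra).
  assert (- x = c) by (apply (phi_level_unique T); auto). lra.
Qed.

Lemma F0_level T c : T * phi c = 1 -> F0 (v 0) T = G 0 - G c.
Proof.
  intros Hc. unfold F0. rewrite (winv_level T c Hc).
  rewrite (Series_finite_support (fun k => v 0 k * (1 - exp (- INR k * - c))) K) by (intros k Hk; rewrite HK by lia; ring).
  unfold mgf. rewrite <- fsum_minus. apply fsum_ext. intros k _.
  rewrite Rmult_0_r, exp_0. replace (- INR k * - c) with (INR k * c) by ring. ring.
Qed.

Lemma profile_pre_gel T : 0 <= T -> T * phi 0 <= 1 -> T * mass T - mass_int T = 0.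
Proof.
  exact (uprof_pre_gel mass mass_int G phi G_secant phi_pos (fun s Hs => proj1 (mass_profile s Hs))
    mass_int_bounds mass_int_0 T).
Qed.

Lemma profile_post_gel T c : 0 < T -> T * phi c = 1 -> c <= 0 -> T * mass T - mass_int T = c.
Proof.
  exact (uprof_post_gel mass mass_int G phi G_secant phi_pos (phi_lt)
    (fun s Hs => proj1 (mass_profile s Hs)) (fun s Hs => proj2 (mass_profile s Hs))
    mass_int_bounds mass_int_0 T c).
Qed.

Lemma Phi_pre_gel T : 0 <= T -> T <= / m1 (v 0) -> Phi v T = 0 /\ RInt (Phi v) 0 T = 0.
Proof.
  intros HT HTle. rewrite m1_init in HTle. pose proof (phi_pos 0) as Hphi0.
  assert (Hp : T * phi 0 <= 1).
  { apply Rmult_le_reg_r with (/ phi 0); [now apply Rinv_0_lt_compat|]. rewrite Rmult_assoc, Rinv_r; lra. }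
  pose proof (profile_pre_gel T HT Hp) as Hu.
  assert (HMT : mass T = mass 0).
  { rewrite (proj1 (mass_profile T HT)), (proj1 (mass_profile 0 (Rle_refl 0))), Hu, mass_int_0.
    f_equal. ring. }
  split; [unfold Phi; fold (mass T) (mass 0); lra|]. rewrite RInt_Phi by auto. rewrite <- HMT. lra.
Qed.

Lemma Phi_post_gel T : / m1 (v 0) <= T -> Phi v T = F0 (v 0) T /\ RInt (Phi v) 0 T = G0 (v 0) T.
Proof.
  intros HTge. rewrite m1_init in HTge. pose proof (phi_pos 0) as Hphi0.
  assert (HT : 0 < T) by (pose proof (Rinv_0_lt_compat _ Hphi0); lra).
  assert (Hp : 1 <= T * phi 0).
  { apply Rmult_le_reg_r with (/ phi 0); [now apply Rinv_0_lt_compat|]. rewrite Rmult_assoc, Rinv_r; lra. }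
  destruct (phi_level_ex T HT) as [c Hc].
  assert (Hc0 : c <= 0).
  { destruct (Rle_or_lt c 0) as [|Hc0]; auto. pose proof (phi_lt 0 c Hc0).
    assert (T * phi 0 < T * phi c) by (apply Rmult_lt_compat_l; lra). lra. }
  pose proof (profile_post_gel T c HT Hc Hc0) as Hu.
  assert (HMT : mass T = G c) by (rewrite (proj1 (mass_profile T ltac:(lra))), Hu; auto).
  assert (HM0 : mass 0 = G 0) by (rewrite (proj1 (mass_profile 0 (Rle_refl 0))), mass_int_0; f_equal; ring).
  split.
  - unfold Phi. fold (mass T) (mass 0). rewrite F0_level with (c := c); auto. lra.
  - rewrite RInt_Phi by lra. unfold G0. rewrite F0_level with (c := c), winv_level with (c := c); auto.
    replace (mass_int T) with (T * mass T - c) by lra. rewrite HMT, HM0. lra.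
Qed.

End CriticalSolution.

Lemma init_support v : critical_solution v -> in_Nstar (v 0) -> (exists k, (1 <= k)%nat /\ v 0 k <> 0) ->
  exists K k0, (forall k, (K < k)%nat -> v 0 k = 0) /\ (1 <= k0 <= K)%nat /\ 0 < v 0 k0.
Proof.
  intros Hsol [_ [K HK]] [k0 [Hk0 Hne]]. exists K, k0. split; auto.
  assert (k0 <= K)%nat by (destruct (Nat.le_gt_cases k0 K); auto; exfalso; apply Hne, HK; auto).
  pose proof (v_nonneg v Hsol 0 k0 (Rle_refl 0) Hk0). split; [lia|lra].
Qed.

Theorem lemma5 (v : R -> nat -> R) :
  in_Nstar (v 0) ->
  (exists k, (1 <= k)%nat /\ v 0 k <> 0) ->
  critical_solution v ->
  forall T, 0 <= T ->
    (T <= / m1 (v 0) -> Phi v T = 0 /\ RInt (Phi v) 0 T = 0) /\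
    (/ m1 (v 0) <= T -> Phi v T = F0 (v 0) T /\ RInt (Phi v) 0 T = G0 (v 0) T).
Proof.
  intros Hstar Hnz Hsol T HT.
  destruct (init_support v Hsol Hstar Hnz) as [K [k0 [HK [Hk0 Hak0]]]].
  split.
  - now apply (Phi_pre_gel v Hsol K HK k0 Hk0 Hak0).
  - now apply (Phi_post_gel v Hsol K HK k0 Hk0 Hak0).
Qed.
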